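(* Let $Z=(X,Y)\in\Omega_m$ with $m$ odd, and suppose $\mathcal P(Z)$ has no singular points in $S^1$. Then $S^1$ is a closed poly-trajectory of type 1 of $\mathcal P(Z)$, and the derivative at $p_0\in S^1\cap D$ of the Poincaré (first return) map of $S^1$ on a transversal section at $p_0$ is $$\Pi'(p_0)=e^{\sigma\mu},\qquad \mu=\int_0^{\pi}\left(\frac{R_{1,m}(\theta)}{A_{1,m}(\theta)}+\frac{R_{2,m}(\theta)}{A_{2,m}(\theta)}\right)d\theta,$$ where $\sigma=-1$ if $S^1$ is oriented counterclockwise and $\sigma=1$ otherwise. Moreover $S^1$ is an attractor if $\sigma\mu<0$ and a repeller if $\sigma\mu>0$; in particular $S^1$ is an elementary closed poly-trajectory if and only if $\mu\neq0$.
   Context: $\chi_m$ is the space of real polynomial vector fields $X=P\partial_x+Q\partial_y$ on $\mathbb R^2$ with $\deg P,\deg Q\le m$; $\deg X=\max\{\deg P,\deg Q\}$. $\Omega_m$ is the set of pairs $Z=(X,Y)$, $X,Y\in\chi_m$ of degree exactly $m$, regarded as the discontinuous vector field equal to $X$ on $\{y\ge0\}$ and $Y$ on $\{y\le0\}$. For $X\in\chi_m$, $\mathcal P(X)$ is the unique analytic vector field tangent to $S^2=\{x^2+y^2+z^2=1\}$ whose restriction to $S^2_+=\{z>0\}$ is $z^{m-1}\wp^*(X)$, $\wp(u,v)=(u,v,1)/\sqrt{u^2+v^2+1}$; $S^1=\{z=0\}$ is invariant. $\mathcal P(Z)=(\mathcal P(X),\mathcal P(Y))$ is the discontinuous field on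 the sphere equal to $\mathcal P(X)$ where $y\ge0$, $\mathcal P(Y)$ where $y\le0$, with $f(x,y,z)=y$ and $D=\{y=0\}$; $S^1\cap D=\{(\pm1,0,0)\}$. Write $X=(P_1,Q_1)$, $Y=(P_2,Q_2)$ and let $P_{k,m},Q_{k,m}$ be the homogeneous parts of degree $m$ of $P_k,Q_k$. Define $A_{k,m}(\theta)=Q_{k,m}(\cos\theta,\sin\theta)\cos\theta-P_{k,m}(\cos\theta,\sin\theta)\sin\theta$ and $R_{k,m}(\theta)=P_{k,m}(\cos\theta,\sin\theta)\cos\theta+Q_{k,m}(\cos\theta,\sin\theta)\sin\theta$, $k=1,2$. The Poincaré map is computed in coordinates $(\theta,\rho)$ given by $(\theta,\rho)\mapsto(1+\rho^2)^{-1/2}(\cos\theta,\sin\theta,\rho)$ (so $\rho=0$ is $S^1$), on the transversal section $\{\theta=0,\ 0\le\rho\le\delta_0\}$, parametrized by $\rho$. A closed poly-trajectory is of type 1 if it meets $D$ only at points where $(\mathcal P(X)f)(\mathcal P(Y)f)>0$ (sewing points); a closed poly-trajectory of type 1 is elementary if the derivative of its first return map is $\neq1$. *)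

From Stdlib Require Import Reals Lra.
Open Scope R_scope.

(** * Polynomial vector fields of degree <= m on R^2.
    A polynomial p(x,y) is given by its coefficient function c, with
    c i j the coefficient of x^i y^j; only monomials of total degree <= m
    are ever used, so any c represents an element of R[x,y]_{<= m}. *)
Record pvf := mkPvf { cP : nat -> nat -> R ; cQ : nat -> nat -> R }.

Definition hom (c : nat -> nat -> R) (k : nat) (x y : R) : R :=
  sum_f_R0 (fun i => c i (k - i)%nat * x ^ i * y ^ (k - i)) k.

Definition peval (m : nat) (c : nat -> nat -> R) (x y : R) : R :=
  sum_f_R0 (fun k => hom c k x y) m.

Definition deg_exact (m : nat) (X : pvf) : Prop :=
  exists i : nat, (i <= m)%nat /\ (cP X i (m - i) <> 0 \/ cQ X i (m - i) <> 0).

Definition in_Omega (m : nat) (X Y : pvf) : Prop := deg_exact m X /\ deg_exact m Y.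

(** A_j and R_j built from the homogeneous parts of degree j;
    A_m, R_m are the paper's A_{k,m}, R_{k,m}. *)
Definition Afun (X : pvf) (j : nat) (th : R) : R :=
  hom (cQ X) j (cos th) (sin th) * cos th - hom (cP X) j (cos th) (sin th) * sin th.
Definition Rfun (X : pvf) (j : nat) (th : R) : R :=
  hom (cP X) j (cos th) (sin th) * cos th + hom (cQ X) j (cos th) (sin th) * sin th.

(** * The Poincare compactification P(X) written in the coordinates (theta, rho),
    (theta,rho) |-> (1+rho^2)^{-1/2} (cos theta, sin theta, rho).
    For rho > 0 this is z^{m-1} wp^*(X) expressed in these coordinates
    (the plane point is (u,v) = (cos theta, sin theta)/rho and
    z = rho/sqrt(1+rho^2)); the formula is analytic in (theta,rho) and is
    therefore the (unique analytic) field P(X) on the whole chart. *)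
Definition PX (m : nat) (X : pvf) (th rho : R) : R * R :=
  ( sum_f_R0 (fun j => rho ^ (m - j) * Afun X j th) m / (sqrt (1 + rho ^ 2)) ^ (m - 1),
    - sum_f_R0 (fun j => rho ^ (m + 1 - j) * Rfun X j th) m / (sqrt (1 + rho ^ 2)) ^ (m - 1) ).

(** Lie derivative of f(x,y,z) = y along a field F given in the chart:
    on the chart, f = sin theta / sqrt(1+rho^2). *)
Definition Lf (F : R -> R -> R * R) (th rho : R) : R :=
  fst (F th rho) * cos th / sqrt (1 + rho ^ 2)
  - snd (F th rho) * rho * sin th / (sqrt (1 + rho ^ 2)) ^ 3.

Definition sliding (F G : R -> R -> R * R) (th rho : R) : R * R :=
  ( (Lf G th rho * fst (F th rho) - Lf F th rho * fst (G th rho)) / (Lf G th rho - Lf F th rho),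
    (Lf G th rho * snd (F th rho) - Lf F th rho * snd (G th rho)) / (Lf G th rho - Lf F th rho) ).

(** singular points of the discontinuous field P(Z) (X on y >= 0, i.e.
    sin theta >= 0; Y on y <= 0): equilibria of P(X) in y >= 0, of P(Y) in
    y <= 0, and on D: tangency points and pseudo-equilibria (zeros of the
    sliding field in the sliding/escaping region). *)
Definition singular_point (m : nat) (X Y : pvf) (th rho : R) : Prop :=
  let F := PX m X in let G := PX m Y in
  (sin th >= 0 /\ F th rho = (0, 0)) \/
  (sin th <= 0 /\ G th rho = (0, 0)) \/
  (sin th = 0 /\ (Lf F th rho = 0 \/ Lf G th rho = 0 \/
                  (Lf F th rho * Lf G th rho < 0 /\ sliding F G th rho = (0, 0)))).

Definition no_singular_on_S1 (m : nat) (X Y : pvf) : Prop :=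
  forall th : R, ~ singular_point m X Y th 0.

(** p = point of S^1 cap D with angle th (th = 0 : (1,0,0), th = PI : (-1,0,0))
    is a sewing point *)
Definition sewing (m : nat) (X Y : pvf) (th : R) : Prop :=
  Lf (PX m X) th 0 * Lf (PX m Y) th 0 > 0.

Definition is_sol (F : R -> R -> R * R) (th rh : R -> R) (T : R) : Prop :=
  forall t, 0 <= t <= T ->
    derivable_pt_lim th t (fst (F (th t) (rh t))) /\
    derivable_pt_lim rh t (snd (F (th t) (rh t))).

(** an arc of orbit of F from (a, r0) to (b, r1), with theta strictly between
    a and b in between (so it stays in the open half-sphere between them) *)
Definition arc (F : R -> R -> R * R) (a b r0 r1 : R) : Prop :=
  exists (T : R) (th rh : R -> R),
    0 < T /\ is_sol F th rh T /\
    th 0 = a /\ rh 0 = r0 /\ th T = b /\ rh T = r1 /\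
    (forall t, 0 < t < T -> Rmin a b < th t < Rmax a b).

(** S^1 oriented counterclockwise (theta increasing along S^1) *)
Definition ccw (m : nat) (X : pvf) : Prop := Afun X m 0 > 0.

Definition orient_sign (m : nat) (X : pvf) : R :=
  if Rlt_dec 0 (Afun X m 0) then -1 else 1.

(** first return relation of P(Z) on the section {theta = 0, rho >= 0}:
    the poly-trajectory starting at (0, r0) returns to the section at (0, r1)
    (theta = 2 pi or -2 pi in the covering), crossing D at theta = +-pi. *)
Definition return_rel (m : nat) (X Y : pvf) (r0 r1 : R) : Prop :=
  if Rlt_dec 0 (Afun X m 0) then
    exists rmid, arc (PX m X) 0 PI r0 rmid /\ arc (PX m Y) PI (2 * PI) rmid r1
  else
    exists rmid, arc (PX m Y) 0 (- PI) r0 rmid /\ arc (PX m X) (- PI) (- 2 * PI) rmid r1.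

Definition is_poincare_map (m : nat) (X Y : pvf) (delta : R) (Pi : R -> R) : Prop :=
  0 < delta /\
  (forall r0, 0 <= r0 < delta -> return_rel m X Y r0 (Pi r0)) /\
  (forall r0 r1, 0 <= r0 < delta -> return_rel m X Y r0 r1 -> r1 = Pi r0).

(** right derivative (section parametrized by rho >= 0) *)
Definition rderiv_at (f : R -> R) (x l : R) : Prop :=
  forall eps, eps > 0 -> exists eta, eta > 0 /\
    forall h, 0 < h < eta -> Rabs ((f (x + h) - f x) / h - l) < eps.

Definition closed_polytraj_type1 (m : nat) (X Y : pvf) : Prop :=
  return_rel m X Y 0 0 /\ sewing m X Y 0 /\ sewing m X Y PI.

Definition elementary (m : nat) (X Y : pvf) : Prop :=
  exists delta Pi d, is_poincare_map m X Y delta Pi /\ rderiv_at Pi 0 d /\ d <> 1.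

Definition attractor (m : nat) (X Y : pvf) : Prop :=
  exists delta, delta > 0 /\ forall r0, 0 < r0 < delta ->
    exists u : nat -> R, u 0%nat = r0 /\
      (forall n, return_rel m X Y (u n) (u (S n))) /\ Un_cv u 0.
Definition repeller (m : nat) (X Y : pvf) : Prop :=
  exists delta, delta > 0 /\ forall r0, 0 < r0 < delta ->
    exists u : nat -> R, u 0%nat = r0 /\
      (forall n, return_rel m X Y (u (S n)) (u n)) /\ Un_cv u 0.

From Stdlib Require Import Reals Lra Psatz Factorial ZArith Classical IndefiniteDescription FunctionalExtensionality.
From Coquelicot Require Import Coquelicot.
Open Scope R_scope.

(** In the chart [(theta, rho)], [P(X)] is, up to a positive factor,
    [theta' = A_m(theta) + O(rho)] and [rho' = - rho (R_m(theta) + O(rho))].  Hence along an orbit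
    near [S^1], [d/dt (ln rho + Phi(theta)) = O(rho) theta'] with [Phi' = R_m / A_m]: over half a
    turn, [ln rho] changes by [- int R_m / A_m + O(rho)]. *)


(** * Elementary real analysis *)

(** epsilon-delta characterisations of [continuity_pt], without the [x <> y] side condition. *)
Lemma continuity_pt_of_eps (f : R -> R) (x : R) :
  (forall eps, eps > 0 -> exists del, del > 0 /\
     forall y, Rabs (y - x) < del -> Rabs (f y - f x) < eps) ->
  continuity_pt f x.
Proof.
  intros H eps Heps. destruct (H eps Heps) as [d [Hd H']].
  exists d; split; [lra|]. intros y [_ Hy]. apply H'. exact Hy.
Qed.

Lemma continuity_pt_eps (f : R -> R) (x : R) : continuity_pt f x ->
  forall eps, eps > 0 -> exists del, del > 0 /\
    forall y, Rabs (y - x) < del -> Rabs (f y - f x) < eps.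
Proof.
  intros H eps Heps. destruct (H eps Heps) as [d [Hd H']].
  exists d; split; [lra|]. intros y Hy.
  destruct (Req_dec y x) as [->|Hne].
  - unfold Rminus; rewrite Rplus_opp_r, Rabs_R0; lra.
  - apply H'. split; [split; [exact I | auto] | exact Hy].
Qed.

Lemma derivable_lim_continuous (f : R -> R) (x l : R) :
  derivable_pt_lim f x l -> continuity_pt f x.
Proof. intros H. apply derivable_continuous_pt. exists l. exact H. Qed.

Lemma sin_lipschitz (a b : R) : Rabs (sin a - sin b) <= Rabs (a - b).
Proof.
  assert (Hlt : forall x y, x < y -> Rabs (sin y - sin x) <= Rabs (y - x)).
  { intros x y Hxy. destruct (MVT_cor2 sin cos x y Hxy) as [c [Hc _]].
    { intros; apply derivable_pt_lim_sin. }
    rewrite Hc, Rabs_mult. pose proof (COS_bound c).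
    assert (Rabs (cos c) <= 1) by (apply Rabs_le; lra).
    pose proof (Rabs_pos (y - x)). nra. }
  destruct (Rtotal_order a b) as [Hab|[->|Hab]].
  - rewrite <- (Rabs_Ropp (sin a - sin b)), <- (Rabs_Ropp (a - b)).
    replace (- (sin a - sin b)) with (sin b - sin a) by ring.
    replace (- (a - b)) with (b - a) by ring. auto.
  - unfold Rminus; rewrite !Rplus_opp_r, Rabs_R0; lra.
  - auto.
Qed.

Lemma cos_lipschitz (a b : R) : Rabs (cos a - cos b) <= Rabs (a - b).
Proof.
  rewrite !cos_sin. replace (a - b) with ((PI / 2 + a) - (PI / 2 + b)) by ring.
  apply sin_lipschitz.
Qed.

Lemma derive_nonpos_decr (f f' : R -> R) (a b : R) : a <= b ->
  (forall t, a <= t <= b -> derivable_pt_lim f t (f' t)) ->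
  (forall t, a <= t <= b -> f' t <= 0) -> f b <= f a.
Proof.
  intros Hab Hd Hs. destruct (Req_dec a b) as [->|Hne]; [lra|].
  destruct (MVT_cor2 f f' a b ltac:(lra) Hd) as [c [Hc Hc']].
  assert (f' c <= 0) by (apply Hs; lra). nra.
Qed.

Lemma derive_nonneg_incr (f f' : R -> R) (a b : R) : a <= b ->
  (forall t, a <= t <= b -> derivable_pt_lim f t (f' t)) ->
  (forall t, a <= t <= b -> 0 <= f' t) -> f a <= f b.
Proof.
  intros Hab Hd Hs. destruct (Req_dec a b) as [->|Hne]; [lra|].
  destruct (MVT_cor2 f f' a b ltac:(lra) Hd) as [c [Hc Hc']].
  assert (0 <= f' c) by (apply Hs; lra). nra.
Qed.

Lemma derive_lower_bound_growth (f d : R -> R) (a T : R) :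
  (forall t, 0 <= t <= T -> derivable_pt_lim f t (d t) /\ a <= d t) ->
  forall t1 t2, 0 <= t1 <= t2 -> t2 <= T -> a * (t2 - t1) <= f t2 - f t1.
Proof.
  intros H t1 t2 H1 H2.
  assert (f t1 - a * t1 <= f t2 - a * t2); [|lra].
  apply (derive_nonneg_incr (fun t => f t - a * t) (fun t => d t - a)); [lra| |].
  - intros u Hu. apply derivable_pt_lim_minus; [apply H; lra|].
    replace a with (a * 1) at 2 by ring. apply derivable_pt_lim_scal, derivable_pt_lim_id.
  - intros u Hu. destruct (H u ltac:(lra)). lra.
Qed.

Lemma derivable_lim_exp_lin (k t : R) :
  derivable_pt_lim (fun t => exp (k * t)) t (exp (k * t) * k).
Proof.
  assert (Hx := derivable_pt_lim_comp (fun t => k * t) exp t (k * 1) _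
      (derivable_pt_lim_scal _ _ _ _ (derivable_pt_lim_id t)) (derivable_pt_lim_exp (k * t))).
  eapply derivable_pt_lim_ext; [|replace (exp (k * t) * k) with (exp (k * t) * (k * 1)) by ring; exact Hx].
  intros; reflexivity.
Qed.

Lemma derivable_lim_sq_diff (u v : R -> R) (u' v' t : R) :
  derivable_pt_lim u t u' -> derivable_pt_lim v t v' ->
  derivable_pt_lim (fun t => (u t - v t) ^ 2) t (2 * (u t - v t) * (u' - v')).
Proof.
  intros Hu Hv.
  assert (H := derivable_pt_lim_comp (fun t => u t - v t) (fun x => x ^ 2) t (u' - v') _
     (derivable_pt_lim_minus _ _ _ _ _ Hu Hv) (derivable_pt_lim_pow (u t - v t) 2)).
  unfold comp in H. simpl in H.
  eapply derivable_pt_lim_ext;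
    [| replace (2 * (u t - v t) * (u' - v')) with (2 * ((u t - v t) * 1) * (u' - v')) by ring; exact H].
  intros; reflexivity.
Qed.

Lemma derivable_lim_sq (u : R -> R) (u' t : R) : derivable_pt_lim u t u' ->
  derivable_pt_lim (fun t => u t ^ 2) t (2 * u t * u').
Proof.
  intros H. assert (H2 := derivable_lim_sq_diff u (fun _ => 0) u' 0 t H (derivable_pt_lim_const 0 t)).
  eapply derivable_pt_lim_ext; [|replace (2 * u t * u') with (2 * (u t - 0) * (u' - 0)) by ring; exact H2].
  intros; simpl; ring.
Qed.

Lemma derivable_lim_shift (Phi g : R -> R) (a x : R) :
  (forall x, derivable_pt_lim Phi x (g x)) ->
  derivable_pt_lim (fun x => Phi (x + a)) x (g (x + a)).
Proof.
  intros H. assert (Hid : derivable_pt_lim (fun x => x + a) x 1).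
  { replace 1 with (1 + 0) by ring.
    apply derivable_pt_lim_plus; [apply derivable_pt_lim_id | apply derivable_pt_lim_const]. }
  assert (H2 := derivable_pt_lim_comp (fun x => x + a) Phi x 1 _ Hid (H (x + a))).
  eapply derivable_pt_lim_ext; [|replace (g (x + a)) with (g (x + a) * 1) by ring; exact H2].
  intros; reflexivity.
Qed.

Lemma exp_le_compat (x y : R) : x <= y -> exp x <= exp y.
Proof. intros [H| ->]; [left; apply exp_increasing; auto | right; reflexivity]. Qed.

Lemma continuous_nonvanishing_pos (f : R -> R) (T : R) : (forall t, continuity_pt f t) -> 0 < f 0 ->
  (forall t, 0 <= t <= T -> f t <> 0) -> forall t, 0 <= t <= T -> 0 < f t.
Proof.
  intros Hc H0 Hn t Ht. destruct (Rlt_or_le 0 (f t)) as [|Hle]; auto. exfalso.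
  destruct (IVT_cor f 0 t Hc ltac:(lra)) as [z [Hz Hz']]; [nra|].
  apply (Hn z); [lra | auto].
Qed.

Lemma continuous_nonvanishing_sign (f : R -> R) (a b : R) : (forall x, continuity_pt f x) -> a <= b ->
  (forall x, a <= x <= b -> f x <> 0) -> forall x, a <= x <= b -> 0 < f a * f x.
Proof.
  intros Hc Hab Hn x Hx. apply Rnot_le_lt. intros Hle.
  destruct (IVT_cor f a x Hc ltac:(lra) ltac:(lra)) as [z [Hz Hz']].
  apply (Hn z); [lra | auto].
Qed.

Lemma continuous_pos_lower_bound (f : R -> R) (lo hi : R) : lo <= hi -> (forall x, continuity_pt f x) ->
  (forall x, lo <= x <= hi -> 0 < f x) -> exists c, 0 < c /\ forall x, lo <= x <= hi -> 2 * c <= f x.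
Proof.
  intros Hlh Hc Hp. destruct (continuity_ab_min f lo hi Hlh (fun c _ => Hc c)) as [mx [Hmx Hin]].
  exists (f mx / 2). split; [specialize (Hp mx Hin); lra|]. intros x Hx. specialize (Hmx x Hx). lra.
Qed.

(** * Bounded, globally Lipschitz functions of two variables

    These are the right-hand sides for which the Picard iteration converges globally.
    The compactified field is brought into this class by clamping its arguments. *)

Definition bounded2 (f : R -> R -> R) (M : R) : Prop := forall a b, Rabs (f a b) <= M.

Definition lipschitz2 (f : R -> R -> R) (L : R) : Prop :=
  forall a b a' b', Rabs (f a b - f a' b') <= L * (Rabs (a - a') + Rabs (b - b')).

Definition tame (f : R -> R -> R) : Prop :=
  exists M L, 0 <= M /\ 0 <= L /\ bounded2 f M /\ lipschitz2 f L.

Lemma tame_bounded (f : R -> R -> R) : tame f -> exists M, 0 <= M /\ bounded2 f M.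
Proof. intros [M [L [HM [_ [H _]]]]]. exists M. auto. Qed.

Lemma tame_lipschitz (f : R -> R -> R) : tame f -> exists L, 0 < L /\ lipschitz2 f L.
Proof.
  intros [M [L [_ [HL [_ H]]]]]. exists (L + 1). split; [lra|]. intros a b a' b'.
  specialize (H a b a' b'). pose proof (Rabs_pos (a - a')); pose proof (Rabs_pos (b - b')). nra.
Qed.

Lemma tame_ext (f g : R -> R -> R) : (forall a b, f a b = g a b) -> tame f -> tame g.
Proof.
  intros E [M [L [HM [HL [H1 H2]]]]]. exists M, L. repeat split; auto.
  - intros a b. rewrite <- E. apply H1.
  - intros a b a' b'. rewrite <- !E. apply H2.
Qed.

Lemma tame_const (c : R) : tame (fun _ _ => c).
Proof.
  exists (Rabs c), 0. repeat split; [apply Rabs_pos | lra | intros a b; lra |].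
  intros a b a' b'. unfold Rminus; rewrite Rplus_opp_r, Rabs_R0. lra.
Qed.

Lemma tame_plus (f g : R -> R -> R) : tame f -> tame g -> tame (fun a b => f a b + g a b).
Proof.
  intros [M1 [L1 [HM1 [HL1 [B1 H1]]]]] [M2 [L2 [HM2 [HL2 [B2 H2]]]]].
  exists (M1 + M2), (L1 + L2). repeat split; [lra | lra | |].
  - intros a b. eapply Rle_trans; [apply Rabs_triang|]. pose proof (B1 a b); pose proof (B2 a b). lra.
  - intros a b a' b'. specialize (H1 a b a' b'). specialize (H2 a b a' b').
    pose proof (Rabs_pos (a - a')); pose proof (Rabs_pos (b - b')).
    replace (f a b + g a b - (f a' b' + g a' b')) with ((f a b - f a' b') + (g a b - g a' b')) by ring.
    eapply Rle_trans; [apply Rabs_triang | nra].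
Qed.

Lemma tame_opp (f : R -> R -> R) : tame f -> tame (fun a b => - f a b).
Proof.
  intros [M [L [HM [HL [B H]]]]]. exists M, L. repeat split; auto.
  - intros a b. rewrite Rabs_Ropp. apply B.
  - intros a b a' b'. replace (- f a b - - f a' b') with (- (f a b - f a' b')) by ring.
    rewrite Rabs_Ropp. apply H.
Qed.

(** products (boundedness is what makes products Lipschitz) *)
Lemma tame_mult (f g : R -> R -> R) : tame f -> tame g -> tame (fun a b => f a b * g a b).
Proof.
  intros [M1 [L1 [HM1 [HL1 [B1 H1]]]]] [M2 [L2 [HM2 [HL2 [B2 H2]]]]].
  exists (M1 * M2), (M1 * L2 + M2 * L1). repeat split; [nra | nra | |].
  - intros a b. rewrite Rabs_mult. pose proof (B1 a b); pose proof (B2 a b).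
    pose proof (Rabs_pos (f a b)); pose proof (Rabs_pos (g a b)). nra.
  - intros a b a' b'. specialize (H1 a b a' b'). specialize (H2 a b a' b').
    pose proof (B1 a' b'); pose proof (B2 a b).
    replace (f a b * g a b - f a' b' * g a' b')
      with (f a' b' * (g a b - g a' b') + g a b * (f a b - f a' b')) by ring.
    eapply Rle_trans; [apply Rabs_triang|]. rewrite !Rabs_mult.
    set (D := Rabs (a - a') + Rabs (b - b')) in *.
    pose proof (Rabs_pos (g a b - g a' b')); pose proof (Rabs_pos (f a b - f a' b')).
    assert (Rabs (f a' b') * Rabs (g a b - g a' b') <= M1 * (L2 * D)) by (apply Rmult_le_compat; auto; apply Rabs_pos).
    assert (Rabs (g a b) * Rabs (f a b - f a' b') <= M2 * (L1 * D)) by (apply Rmult_le_compat; auto; apply Rabs_pos).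
    nra.
Qed.

Lemma tame_pow (f : R -> R -> R) (n : nat) : tame f -> tame (fun a b => f a b ^ n).
Proof. intros Hf. induction n as [|n IH]; simpl; [apply tame_const | apply tame_mult; auto]. Qed.

Lemma tame_sum (f : nat -> R -> R -> R) (n : nat) : (forall i, (i <= n)%nat -> tame (f i)) ->
  tame (fun a b => sum_f_R0 (fun i => f i a b) n).
Proof.
  induction n as [|n IH]; intros H; simpl; [apply H; lia|].
  apply tame_plus; [apply IH; intros; apply H; lia | apply H; lia].
Qed.

Lemma tame_cos : tame (fun a _ => cos a).
Proof.
  exists 1, 1. repeat split; [lra | lra | |].
  - intros a b. pose proof (COS_bound a). apply Rabs_le; lra.
  - intros a b a' b'. pose proof (cos_lipschitz a a'). pose proof (Rabs_pos (b - b')). lra.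
Qed.

Lemma tame_sin : tame (fun a _ => sin a).
Proof.
  exists 1, 1. repeat split; [lra | lra | |].
  - intros a b. pose proof (SIN_bound a). apply Rabs_le; lra.
  - intros a b a' b'. pose proof (sin_lipschitz a a'). pose proof (Rabs_pos (b - b')). lra.
Qed.

Lemma lipschitz2_comp_continuous (f : R -> R -> R) (L : R) (u v : R -> R) (t : R) :
  0 < L -> lipschitz2 f L -> continuity_pt u t -> continuity_pt v t ->
  continuity_pt (fun s => f (u s) (v s)) t.
Proof.
  intros HL H Hu Hv. apply continuity_pt_of_eps. intros eps Heps.
  assert (He : eps / (2 * L) > 0) by (apply Rdiv_lt_0_compat; lra).
  destruct (continuity_pt_eps u t Hu _ He) as [d1 [Hd1 H1]].
  destruct (continuity_pt_eps v t Hv _ He) as [d2 [Hd2 H2]].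
  exists (Rmin d1 d2). split; [apply Rmin_pos; lra|]. intros y Hy.
  specialize (H1 y (Rlt_le_trans _ _ _ Hy (Rmin_l _ _))).
  specialize (H2 y (Rlt_le_trans _ _ _ Hy (Rmin_r _ _))).
  eapply Rle_lt_trans; [apply H|].
  replace eps with (L * (eps / (2 * L) + eps / (2 * L))) by (field; lra).
  apply Rmult_lt_compat_l; lra.
Qed.

Lemma tame_comp_continuous (f : R -> R -> R) (u v : R -> R) (t : R) :
  tame f -> continuity_pt u t -> continuity_pt v t -> continuity_pt (fun s => f (u s) (v s)) t.
Proof. intros Hf. destruct (tame_lipschitz f Hf) as [L [HL H]]. apply (lipschitz2_comp_continuous f L); auto. Qed.

Lemma tame_continuous_fst (f : R -> R -> R) (b x : R) : tame f -> continuity_pt (fun a => f a b) x.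
Proof.
  intros H. apply (tame_comp_continuous f (fun a => a) (fun _ => b) x H).
  - apply derivable_continuous_pt, derivable_pt_id.
  - apply continuity_pt_const; intros ? ?; reflexivity.
Qed.

Definition clamp (lo hi x : R) : R := Rmax lo (Rmin hi x).

Lemma clamp_lipschitz (lo hi x y : R) : Rabs (clamp lo hi x - clamp lo hi y) <= Rabs (x - y).
Proof.
  unfold clamp, Rmax, Rmin. repeat destruct Rle_dec; apply Rabs_le; split;
  pose proof (Rle_abs (x - y)); pose proof (Rle_abs (- (x - y))); rewrite Rabs_Ropp in *; lra.
Qed.

Lemma clamp_in (lo hi x : R) : lo <= hi -> lo <= clamp lo hi x <= hi.
Proof. unfold clamp, Rmax, Rmin; repeat destruct Rle_dec; lra. Qed.

Lemma clamp_id (lo hi x : R) : lo <= x <= hi -> clamp lo hi x = x.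
Proof. unfold clamp, Rmax, Rmin; repeat destruct Rle_dec; lra. Qed.

Lemma clamp_sym_id (d x : R) : Rabs x <= d -> clamp (- d) d x = x.
Proof.
  intros H. apply clamp_id. pose proof (Rle_abs x). pose proof (Rle_abs (- x)).
  rewrite Rabs_Ropp in *. lra.
Qed.

Lemma clamp_sym_abs (d x : R) : 0 <= d -> Rabs (clamp (- d) d x) <= Rabs x /\ Rabs (clamp (- d) d x) <= d.
Proof.
  intros Hd. unfold clamp, Rmax, Rmin; repeat destruct Rle_dec; split; apply Rabs_le;
  pose proof (Rle_abs x); pose proof (Rle_abs (- x)); rewrite Rabs_Ropp in *; lra.
Qed.

Lemma tame_clamp_snd (d : R) : 0 <= d -> tame (fun _ b => clamp (- d) d b).
Proof.
  intros Hd. exists d, 1. repeat split; [lra | lra | |].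
  - intros a b. apply (clamp_sym_abs d b Hd).
  - intros a b a' b'. pose proof (clamp_lipschitz (- d) d b b'). pose proof (Rabs_pos (a - a')). lra.
Qed.

Lemma tame_clamp_fst (f : R -> R -> R) (lo hi : R) : tame f -> tame (fun a b => f (clamp lo hi a) b).
Proof.
  intros [M [L [HM [HL [B H]]]]]. exists M, L. repeat split; auto.
  - intros a b. apply B.
  - intros a b a' b'. eapply Rle_trans; [apply H|]. apply Rmult_le_compat_l; auto.
    pose proof (clamp_lipschitz lo hi a a'). lra.
Qed.

Lemma inv_sqrt_bound (x : R) : 0 < / sqrt (1 + x ^ 2) <= 1.
Proof.
  assert (Hx : 0 <= 1 + x ^ 2) by nra. pose proof (sqrt_sqrt _ Hx).
  pose proof (sqrt_pos (1 + x ^ 2)). assert (sqrt (1 + x ^ 2) >= 1) by nra.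
  split; [apply Rinv_0_lt_compat; lra|].
  apply Rle_trans with (/ 1); [apply Rinv_le_contravar; lra | rewrite Rinv_1; lra].
Qed.

Lemma inv_sqrt_lipschitz (x y : R) : Rabs (/ sqrt (1 + x ^ 2) - / sqrt (1 + y ^ 2)) <= Rabs (x - y).
Proof.
  assert (Hx : 0 <= 1 + x ^ 2) by nra. assert (Hy : 0 <= 1 + y ^ 2) by nra.
  pose proof (sqrt_sqrt _ Hx) as Sx. pose proof (sqrt_sqrt _ Hy) as Sy.
  pose proof (sqrt_pos (1 + x ^ 2)). pose proof (sqrt_pos (1 + y ^ 2)).
  set (p := sqrt (1 + x ^ 2)) in *. set (q := sqrt (1 + y ^ 2)) in *. clearbody p q.
  assert (p >= 1) by nra. assert (q >= 1) by nra.
  assert (Rabs x <= p).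
  { apply Rsqr_incr_0_var; [|lra]. unfold Rsqr. rewrite <- Rabs_mult, Rabs_right by nra. nra. }
  assert (Rabs y <= q).
  { apply Rsqr_incr_0_var; [|lra]. unfold Rsqr. rewrite <- Rabs_mult, Rabs_right by nra. nra. }
  (* 1/p - 1/q = (q - p) / (p q) and q - p = (y - x)(y + x) / (p + q) *)
  replace (/ p - / q) with ((q - p) / (p * q)) by (field; lra).
  replace (q - p) with ((y - x) * (y + x) / (p + q)).
  2:{ apply (Rmult_eq_reg_r (p + q)); [|lra]. unfold Rdiv.
      rewrite Rmult_assoc, Rinv_l by lra. nra. }
  unfold Rdiv. rewrite !Rabs_mult, !Rabs_inv. rewrite (Rabs_right (p + q)), (Rabs_right (p * q)) by nra.
  rewrite <- (Rabs_Ropp (y - x)). replace (- (y - x)) with (x - y) by ring.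
  assert (Rabs (y + x) <= p + q) by (eapply Rle_trans; [apply Rabs_triang | lra]).
  assert (Rabs (y + x) * / (p + q) <= 1).
  { apply (Rmult_le_reg_r (p + q)); [lra|]. rewrite Rmult_assoc, Rinv_l by lra. lra. }
  assert (/ (p * q) <= 1) by (rewrite <- Rinv_1; apply Rinv_le_contravar; nra).
  pose proof (Rabs_pos (x - y)). pose proof (Rabs_pos (y + x)).
  assert (0 <= / (p + q)) by (apply Rlt_le, Rinv_0_lt_compat; lra).
  assert (0 <= / (p * q)) by (apply Rlt_le, Rinv_0_lt_compat; nra).
  assert (Rabs (x - y) * (Rabs (y + x) * / (p + q)) <= Rabs (x - y)) by nra.
  nra.
Qed.

Lemma tame_inv_sqrt (d : R) : 0 <= d -> tame (fun _ b => / sqrt (1 + clamp (- d) d b ^ 2)).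
Proof.
  intros Hd. exists 1, 1. repeat split; [lra | lra | |].
  - intros a b. pose proof (inv_sqrt_bound (clamp (- d) d b)). rewrite Rabs_right; lra.
  - intros a b a' b'. eapply Rle_trans; [apply inv_sqrt_lipschitz|].
    pose proof (clamp_lipschitz (- d) d b b'). pose proof (Rabs_pos (a - a')). lra.
Qed.

Lemma continuity_pt_continuous (f : R -> R) (x : R) : continuity_pt f x -> continuous f x.
Proof. intros H. apply continuity_pt_filterlim. exact H. Qed.

Lemma ex_RInt_cont (g : R -> R) (a b : R) : (forall x, continuity_pt g x) -> ex_RInt g a b.
Proof.
  intros H. apply (ex_RInt_continuous (V := R_CompleteNormedModule)).
  intros; apply continuity_pt_continuous, H.
Qed.

Lemma derivable_lim_RInt (g : R -> R) (c t : R) : (forall x, continuity_pt g x) ->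
  derivable_pt_lim (fun t => c + RInt g 0 t) t (g t).
Proof.
  intros H. replace (g t) with (0 + g t) by ring.
  apply derivable_pt_lim_plus; [apply derivable_pt_lim_const|].
  apply is_derive_Reals. apply (is_derive_RInt g (fun t => RInt g 0 t) 0 t).
  - apply filter_forall. intros b. apply (RInt_correct (V := R_CompleteNormedModule)).
    apply ex_RInt_cont; auto.
  - apply continuity_pt_continuous, H.
Qed.

Lemma RInt_minus_cont (f g : R -> R) (a b : R) : (forall x, continuity_pt f x) -> (forall x, continuity_pt g x) ->
  RInt (fun s => f s - g s) a b = RInt f a b - RInt g a b.
Proof. intros Hf Hg. apply (RInt_minus (V := R_CompleteNormedModule)); apply ex_RInt_cont; auto. Qed.

Lemma RInt_shift_diff (f g : R -> R) (c t : R) : (forall x, continuity_pt f x) -> (forall x, continuity_pt g x) ->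
  c + RInt f 0 t - (c + RInt g 0 t) = RInt (fun s => f s - g s) 0 t.
Proof. intros. rewrite RInt_minus_cont by auto. ring. Qed.

Lemma INR_fact_pos (n : nat) : 0 < INR (fact n).
Proof. apply lt_0_INR, lt_O_fact. Qed.

Lemma derivable_lim_monomial_fact (C : R) (n : nat) (s : R) :
  derivable_pt_lim (fun s => C * s ^ (S n) / INR (fact (S n))) s (C * s ^ n / INR (fact n)).
Proof.
  pose proof (derivable_pt_lim_scal _ (C / INR (fact (S n))) _ _ (derivable_pt_lim_pow s (S n))) as H.
  unfold mult_real_fct in H.
  replace (C * s ^ n / INR (fact n)) with (C / INR (fact (S n)) * (INR (S n) * s ^ Init.Nat.pred (S n))).
  - eapply derivable_pt_lim_ext; [|exact H]. intros; simpl; unfold Rdiv; ring.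
  - simpl pred. rewrite fact_simpl, mult_INR. pose proof (INR_fact_pos n).
    assert (0 < INR (S n)) by (apply lt_0_INR; lia). field. lra.
Qed.

Lemma RInt_monomial_bound_pos (g : R -> R) (t C : R) (n : nat) :
  (forall x, continuity_pt g x) -> 0 <= C -> 0 <= t ->
  (forall s, 0 <= s <= t -> Rabs (g s) <= C * s ^ n / INR (fact n)) ->
  Rabs (RInt g 0 t) <= C * t ^ (S n) / INR (fact (S n)).
Proof.
  intros Hg HC Ht Hb.
  assert (Hga : forall x, continuity_pt (fun s => Rabs (g s)) x).
  { intros x. apply (continuity_pt_comp g Rabs); [apply Hg | apply Rcontinuity_abs]. }
  pose proof (INR_fact_pos n).
  assert (Hpc : forall x, continuity_pt (fun s => C * s ^ n / INR (fact n)) x) by (intros; reg).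
  eapply Rle_trans; [apply abs_RInt_le; auto; apply ex_RInt_cont; auto|].
  eapply Rle_trans.
  { apply (RInt_le _ (fun s => C * s ^ n / INR (fact n))); auto; try (apply ex_RInt_cont; auto).
    intros x Hx. apply Hb; lra. }
  right. apply is_RInt_unique.
  replace (C * t ^ S n / INR (fact (S n)))
    with (minus (C * t ^ (S n) / INR (fact (S n))) (C * 0 ^ (S n) / INR (fact (S n)))).
  - apply (is_RInt_derive (fun s => C * s ^ (S n) / INR (fact (S n)))).
    + intros; apply is_derive_Reals, derivable_lim_monomial_fact.
    + intros. apply continuity_pt_continuous, Hpc.
  - unfold minus, plus, opp; simpl. rewrite Rmult_0_l, Rmult_0_r. unfold Rdiv.
    rewrite Rmult_0_l, Ropp_0, Rplus_0_r. reflexivity.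
Qed.

Lemma RInt_monomial_bound (g : R -> R) (t C : R) (n : nat) : (forall x, continuity_pt g x) -> 0 <= C ->
  (forall s, Rmin 0 t <= s <= Rmax 0 t -> Rabs (g s) <= C * Rabs s ^ n / INR (fact n)) ->
  Rabs (RInt g 0 t) <= C * Rabs t ^ (S n) / INR (fact (S n)).
Proof.
  intros Hg HC Hb.
  destruct (Rle_or_lt 0 t) as [Ht|Ht].
  - rewrite (Rabs_right t) by lra. apply RInt_monomial_bound_pos; auto.
    intros s Hs. rewrite <- (Rabs_right s) at 2 by lra. apply Hb.
    rewrite Rmin_left, Rmax_right; lra.
  - (* reflect [s |-> - s] to reduce to a nonnegative upper bound *)
    assert (Hgr : forall x, continuity_pt (fun y => g (-1 * y + 0)) x).
    { intros x. apply (continuity_pt_comp (fun y => -1 * y + 0) g); [|apply Hg].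
      apply derivable_continuous_pt. apply derivable_pt_plus;
        [apply derivable_pt_scal, derivable_pt_id | apply derivable_pt_const]. }
    assert (E : RInt g 0 t = RInt (fun y => scal (-1) (g (-1 * y + 0))) 0 (- t)).
    { rewrite (RInt_comp_lin (V := R_CompleteNormedModule)); [f_equal; ring | apply ex_RInt_cont; auto]. }
    rewrite E, (RInt_scal (V := R_CompleteNormedModule)).
    assert (Hsc : forall z : R, scal (-1) z = - z) by (intros; unfold scal; simpl; unfold mult; simpl; ring).
    rewrite Hsc, Rabs_Ropp, (Rabs_left t) by lra.
    apply RInt_monomial_bound_pos; auto; [lra|].
    intros s Hs. replace s with (Rabs (-1 * s + 0)) at 2 by (rewrite Rabs_left1; lra).
    apply Hb. rewrite Rmin_right, Rmax_left; lra.
    apply ex_RInt_cont; auto.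
Qed.

(** * Picard-Lindelof for bounded, globally Lipschitz planar fields

    The iterates [(x_n, y_n)] satisfy the factorial gap estimate
    [|x_(n+1) - x_n| + |y_(n+1) - y_n| <= picard_gap M L |t| n], hence converge locally uniformly to a
    solution of the integral equation, which is then a global solution of the ODE. *)

Definition picard_gap (M L B : R) (n : nat) : R := 2 * M * (2 * L) ^ n * B ^ (S n) / INR (fact (S n)).

Lemma picard_gap_nonneg (M L B : R) (n : nat) : 0 <= M -> 0 <= L -> 0 <= B -> 0 <= picard_gap M L B n.
Proof.
  intros. unfold picard_gap. pose proof (INR_fact_pos (S n)).
  apply Rmult_le_pos; [repeat apply Rmult_le_pos; try lra; apply pow_le; lra|].
  left; apply Rinv_0_lt_compat; lra.
Qed.

Lemma picard_gap_mono (M L B1 B2 : R) (n : nat) : 0 <= M -> 0 <= L -> 0 <= B1 <= B2 ->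
  picard_gap M L B1 n <= picard_gap M L B2 n.
Proof.
  intros. unfold picard_gap, Rdiv. pose proof (INR_fact_pos (S n)).
  apply Rmult_le_compat_r; [left; apply Rinv_0_lt_compat; lra|].
  apply Rmult_le_compat_l; [apply Rmult_le_pos; [lra | apply pow_le; lra]|].
  apply pow_incr; lra.
Qed.

(** once [n + 2 >= 4 L B] the gaps at least halve, so they are summable *)
Lemma picard_gap_halves (M L B : R) (n : nat) : 0 <= M -> 0 < L -> 0 <= B -> 4 * L * B <= INR (S (S n)) ->
  picard_gap M L B (S n) <= picard_gap M L B n / 2.
Proof.
  intros. unfold picard_gap. rewrite (fact_simpl (S n)), mult_INR.
  pose proof (INR_fact_pos (S n)).
  assert (HS : 0 < INR (S (S n))) by (apply lt_0_INR; lia).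
  replace (2 * M * (2 * L) ^ S n * B ^ S (S n) / (INR (S (S n)) * INR (fact (S n))))
    with ((2 * M * (2 * L) ^ n * B ^ S n / INR (fact (S n))) * (2 * L * B / INR (S (S n)))).
  2:{ change ((2 * L) ^ S n) with (2 * L * (2 * L) ^ n). change (B ^ S (S n)) with (B * B ^ S n).
      field. split; lra. }
  set (q := 2 * M * (2 * L) ^ n * B ^ S n / INR (fact (S n))).
  assert (0 <= q) by (apply (picard_gap_nonneg M L B n); lra).
  assert (2 * L * B / INR (S (S n)) <= / 2).
  { apply (Rmult_le_reg_r (INR (S (S n)))); auto. unfold Rdiv. rewrite Rmult_assoc, Rinv_l by lra. lra. }
  unfold Rdiv at 2. apply Rmult_le_compat_l; auto.
Qed.

Lemma picard_gap_small (M L B eps : R) : 0 <= M -> 0 < L -> 0 <= B -> eps > 0 ->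
  exists N, forall n, (n >= N)%nat -> picard_gap M L B n < eps.
Proof.
  intros HM HL HB He.
  destruct (cv_speed_pow_fact (2 * L * B) (eps * L / (M + 1))) as [N HN]; [apply Rdiv_lt_0_compat; nra|].
  exists N. intros n Hn. specialize (HN (S n) ltac:(lia)). unfold R_dist in HN. rewrite Rminus_0_r in HN.
  pose proof (INR_fact_pos (S n)).
  assert (E : picard_gap M L B n = M / L * ((2 * L * B) ^ S n / INR (fact (S n)))).
  { unfold picard_gap. rewrite (Rpow_mult_distr (2 * L) B). change ((2 * L) ^ S n) with (2 * L * (2 * L) ^ n).
    field. split; lra. }
  rewrite E.
  assert (0 <= (2 * L * B) ^ S n / INR (fact (S n))).
  { apply Rmult_le_pos; [apply pow_le; nra | left; apply Rinv_0_lt_compat; lra]. }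
  rewrite Rabs_right in HN by lra.
  apply Rle_lt_trans with ((M + 1) / L * ((2 * L * B) ^ S n / INR (fact (S n)))).
  - apply Rmult_le_compat_r; auto. unfold Rdiv; apply Rmult_le_compat_r; [left; apply Rinv_0_lt_compat|]; lra.
  - apply Rlt_le_trans with ((M + 1) / L * (eps * L / (M + 1))).
    + apply Rmult_lt_compat_l; auto. apply Rdiv_lt_0_compat; lra.
    + right. field. lra.
Qed.

Lemma picard_gap_cv (M L B : R) : 0 <= M -> 0 < L -> 0 <= B -> Un_cv (picard_gap M L B) 0.
Proof.
  intros HM HL HB eps He. destruct (picard_gap_small M L B eps HM HL HB He) as [N HN].
  exists N. intros n Hn. unfold R_dist. rewrite Rminus_0_r, Rabs_right; [auto|].
  apply Rle_ge, picard_gap_nonneg; lra.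
Qed.

Lemma nat_unbounded (r : R) : exists N : nat, r <= INR N.
Proof.
  destruct (archimed (Rabs r)) as [H1 H2]. exists (Z.to_nat (up (Rabs r))).
  rewrite INR_IZR_INZ, Z2Nat.id; [pose proof (Rle_abs r); lra|].
  apply le_IZR. pose proof (Rabs_pos r). lra.
Qed.

Lemma cauchy_cv_Lim_seq (u : nat -> R) :
  (forall eps, eps > 0 -> exists N, forall p q, (p >= N)%nat -> (q >= N)%nat -> Rabs (u p - u q) < eps) ->
  Un_cv u (real (Lim_seq u)).
Proof.
  intros H. assert (Hc : ex_lim_seq_cauchy u).
  { intros eps. destruct (H eps (cond_pos eps)) as [N HN]. exists N. intros; apply HN; lia. }
  apply ex_lim_seq_cauchy_corr in Hc. destruct Hc as [l Hl].
  rewrite (is_lim_seq_unique _ _ Hl). simpl. apply is_lim_seq_Reals. exact Hl.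
Qed.

Lemma Rabs_triang3 (a b c : R) : Rabs (a - c) <= Rabs (a - b) + Rabs (b - c).
Proof. replace (a - c) with ((a - b) + (b - c)) by ring. apply Rabs_triang. Qed.

Lemma uniform_limit_continuous (u : nat -> R -> R) (f : R -> R) (t : R) :
  (forall n, continuity_pt (u n) t) ->
  (forall eps, eps > 0 -> exists n, forall y, Rabs (y - t) <= 1 -> Rabs (f y - u n y) <= eps) ->
  continuity_pt f t.
Proof.
  intros Hc Hu. apply continuity_pt_of_eps. intros eps He.
  destruct (Hu (eps / 4) ltac:(lra)) as [n Hn].
  destruct (continuity_pt_eps _ _ (Hc n) (eps / 4) ltac:(lra)) as [d [Hd Hd']].
  exists (Rmin 1 d). split; [apply Rmin_pos; lra|]. intros y Hy.
  pose proof (Rmin_l 1 d); pose proof (Rmin_r 1 d).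
  specialize (Hd' y ltac:(lra)). pose proof (Hn y ltac:(lra)).
  pose proof (Hn t ltac:(rewrite Rminus_diag, Rabs_R0; lra)).
  pose proof (Rabs_triang3 (f y) (u n y) (f t)). pose proof (Rabs_triang3 (u n y) (u n t) (f t)).
  rewrite <- (Rabs_Ropp (u n t - f t)) in *. replace (- (u n t - f t)) with (f t - u n t) in * by ring.
  lra.
Qed.

Section PicardLindelof.

Variables (F1 F2 : R -> R -> R) (x0 y0 M L : R).
Hypotheses (HM : 0 < M) (HL : 0 < L).
Hypotheses (F1_bdd : bounded2 F1 M) (F2_bdd : bounded2 F2 M).
Hypotheses (F1_lip : lipschitz2 F1 L) (F2_lip : lipschitz2 F2 L).

Fixpoint picard_iter (n : nat) : R -> R * R :=
  match n with
  | O => fun _ => (x0, y0)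
  | S n => fun t =>
      (x0 + RInt (fun s => F1 (fst (picard_iter n s)) (snd (picard_iter n s))) 0 t,
       y0 + RInt (fun s => F2 (fst (picard_iter n s)) (snd (picard_iter n s))) 0 t)
  end.

Definition picard_x (n : nat) (t : R) : R := fst (picard_iter n t).
Definition picard_y (n : nat) (t : R) : R := snd (picard_iter n t).

Lemma picard_x_S (n : nat) (t : R) :
  picard_x (S n) t = x0 + RInt (fun s => F1 (picard_x n s) (picard_y n s)) 0 t.
Proof. reflexivity. Qed.

Lemma picard_y_S (n : nat) (t : R) :
  picard_y (S n) t = y0 + RInt (fun s => F2 (picard_x n s) (picard_y n s)) 0 t.
Proof. reflexivity. Qed.

Lemma picard_iter_continuous (n : nat) (t : R) :
  continuity_pt (picard_x n) t /\ continuity_pt (picard_y n) t.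
Proof.
  revert t. induction n as [|n IH]; intros t.
  - split; apply continuity_pt_const; intros ? ?; reflexivity.
  - split; eapply derivable_lim_continuous; apply derivable_lim_RInt; intros x;
      eapply lipschitz2_comp_continuous; eauto; apply IH.
Qed.

Lemma picard_field1_continuous (n : nat) (t : R) :
  continuity_pt (fun s => F1 (picard_x n s) (picard_y n s)) t.
Proof. eapply lipschitz2_comp_continuous; eauto; apply picard_iter_continuous. Qed.

Lemma picard_field2_continuous (n : nat) (t : R) :
  continuity_pt (fun s => F2 (picard_x n s) (picard_y n s)) t.
Proof. eapply lipschitz2_comp_continuous; eauto; apply picard_iter_continuous. Qed.

Lemma picard_step_bound (n : nat) (t : R) :
  Rabs (picard_x (S n) t - picard_x n t) + Rabs (picard_y (S n) t - picard_y n t) <= picard_gap M L (Rabs t) n.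
Proof.
  revert t. induction n as [|n IH]; intros t.
  - rewrite picard_x_S, picard_y_S. change (picard_x 0 t) with x0. change (picard_y 0 t) with y0.
    assert (Eab : forall a b : R, a + b - a = b) by (intros; ring). rewrite !Eab.
    assert (Hint : forall F, (forall x, continuity_pt (fun s => F (picard_x 0 s) (picard_y 0 s)) x) ->
              bounded2 F M -> Rabs (RInt (fun s => F (picard_x 0 s) (picard_y 0 s)) 0 t) <= M * Rabs t).
    { intros F HF HB. replace (M * Rabs t) with (M * Rabs t ^ 1 / INR (fact 1)) by (simpl; field).
      apply RInt_monomial_bound; [auto | lra|]. intros; simpl. rewrite Rmult_1_r, Rdiv_1_r. apply HB. }
    pose proof (Hint F1 (picard_field1_continuous 0) F1_bdd).
    pose proof (Hint F2 (picard_field2_continuous 0) F2_bdd).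
    unfold picard_gap. simpl. rewrite Rmult_1_r, Rdiv_1_r.
    lra.
  - rewrite (picard_x_S (S n)), (picard_y_S (S n)), (picard_x_S n), (picard_y_S n).
    rewrite !RInt_shift_diff by (apply picard_field1_continuous || apply picard_field2_continuous).
    set (C := L * (2 * M * (2 * L) ^ n)).
    assert (HC : 0 <= C) by (unfold C; repeat apply Rmult_le_pos; try lra; apply pow_le; lra).
    assert (Hb : forall s, L * (Rabs (picard_x (S n) s - picard_x n s) + Rabs (picard_y (S n) s - picard_y n s))
                           <= C * Rabs s ^ S n / INR (fact (S n))).
    { intros s. specialize (IH s). unfold picard_gap in IH. unfold C.
      replace (L * (2 * M * (2 * L) ^ n) * Rabs s ^ S n / INR (fact (S n)))
        with (L * (2 * M * (2 * L) ^ n * Rabs s ^ S n / INR (fact (S n)))) by (unfold Rdiv; ring).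
      apply Rmult_le_compat_l; lra. }
    assert (A1 := RInt_monomial_bound
      (fun s => F1 (picard_x (S n) s) (picard_y (S n) s) - F1 (picard_x n s) (picard_y n s)) t C (S n)).
    assert (A2 := RInt_monomial_bound
      (fun s => F2 (picard_x (S n) s) (picard_y (S n) s) - F2 (picard_x n s) (picard_y n s)) t C (S n)).
    replace (picard_gap M L (Rabs t) (S n)) with (2 * (C * Rabs t ^ S (S n) / INR (fact (S (S n))))).
    2:{ unfold picard_gap, C. change ((2 * L) ^ S n) with (2 * L * (2 * L) ^ n). unfold Rdiv. ring. }
    enough (Rabs (RInt (fun s => F1 (picard_x (S n) s) (picard_y (S n) s) - F1 (picard_x n s) (picard_y n s)) 0 t)
              <= C * Rabs t ^ S (S n) / INR (fact (S (S n))) /\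
            Rabs (RInt (fun s => F2 (picard_x (S n) s) (picard_y (S n) s) - F2 (picard_x n s) (picard_y n s)) 0 t)
              <= C * Rabs t ^ S (S n) / INR (fact (S (S n)))) by lra.
    split; [apply A1 | apply A2]; auto;
      try (intros x; apply continuity_pt_minus; [apply picard_field1_continuous | apply picard_field1_continuous]);
      try (intros x; apply continuity_pt_minus; [apply picard_field2_continuous | apply picard_field2_continuous]);
      intros s _; eapply Rle_trans; [apply F1_lip | apply Hb | apply F2_lip | apply Hb].
Qed.

(** telescoping the halving gaps: the iterates are uniformly Cauchy on [[-B, B]] *)
Lemma picard_cauchy (B : R) : 0 <= B -> exists N, forall t, Rabs t <= B -> forall n, (n >= N)%nat -> forall k,
  Rabs (picard_x (n + k) t - picard_x n t) + Rabs (picard_y (n + k) t - picard_y n t)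
    <= 2 * picard_gap M L B n - 2 * picard_gap M L B (n + k).
Proof.
  intros HB. destruct (nat_unbounded (4 * L * B)) as [N HN]. exists N. intros t Ht n Hn k.
  induction k as [|k IHk].
  - rewrite Nat.add_0_r. unfold Rminus; rewrite !Rplus_opp_r, Rabs_R0. lra.
  - rewrite Nat.add_succ_r.
    assert (St := picard_gap_halves M L B (n + k) ltac:(lra) HL HB).
    assert (4 * L * B <= INR (S (S (n + k)))) by (eapply Rle_trans; [apply HN | apply le_INR; lia]).
    specialize (St H).
    assert (D := picard_step_bound (n + k) t).
    assert (picard_gap M L (Rabs t) (n + k) <= picard_gap M L B (n + k))
      by (apply picard_gap_mono; try lra; split; [apply Rabs_pos | auto]).
    pose proof (Rabs_triang3 (picard_x (S (n + k)) t) (picard_x (n + k)%nat t) (picard_x n t)).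
    pose proof (Rabs_triang3 (picard_y (S (n + k)) t) (picard_y (n + k)%nat t) (picard_y n t)).
    lra.
Qed.

Definition picard_sol_x (t : R) : R := real (Lim_seq (fun n => picard_x n t)).
Definition picard_sol_y (t : R) : R := real (Lim_seq (fun n => picard_y n t)).

Lemma picard_cv (t : R) :
  Un_cv (fun n => picard_x n t) (picard_sol_x t) /\ Un_cv (fun n => picard_y n t) (picard_sol_y t).
Proof.
  destruct (picard_cauchy (Rabs t) (Rabs_pos t)) as [N HN].
  assert (Hc : forall eps, eps > 0 -> exists N, forall p q, (p >= N)%nat -> (q >= N)%nat ->
     Rabs (picard_x p t - picard_x q t) < eps /\ Rabs (picard_y p t - picard_y q t) < eps).
  { intros eps He.
    destruct (picard_gap_small M L (Rabs t) (eps / 8) ltac:(lra) HL (Rabs_pos t) ltac:(lra)) as [N1 HN1].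
    exists (max N N1). intros p q Hp Hq. set (n0 := max N N1).
    assert (A := HN t (Rle_refl _) n0 ltac:(lia) (p - n0)%nat).
    assert (B := HN t (Rle_refl _) n0 ltac:(lia) (q - n0)%nat).
    replace (n0 + (p - n0))%nat with p in A by lia. replace (n0 + (q - n0))%nat with q in B by lia.
    specialize (HN1 n0 ltac:(lia)).
    pose proof (picard_gap_nonneg M L (Rabs t) p ltac:(lra) ltac:(lra) (Rabs_pos t)).
    pose proof (picard_gap_nonneg M L (Rabs t) q ltac:(lra) ltac:(lra) (Rabs_pos t)).
    pose proof (Rabs_pos (picard_x p t - picard_x n0 t)). pose proof (Rabs_pos (picard_y p t - picard_y n0 t)).
    pose proof (Rabs_pos (picard_x q t - picard_x n0 t)). pose proof (Rabs_pos (picard_y q t - picard_y n0 t)).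
    pose proof (Rabs_triang3 (picard_x p t) (picard_x n0 t) (picard_x q t)).
    pose proof (Rabs_triang3 (picard_y p t) (picard_y n0 t) (picard_y q t)).
    rewrite <- (Rabs_Ropp (picard_x n0 t - picard_x q t)), <- (Rabs_Ropp (picard_y n0 t - picard_y q t)) in *.
    replace (- (picard_x n0 t - picard_x q t)) with (picard_x q t - picard_x n0 t) in * by ring.
    replace (- (picard_y n0 t - picard_y q t)) with (picard_y q t - picard_y n0 t) in * by ring.
    split; lra. }
  split; apply cauchy_cv_Lim_seq; intros eps He; destruct (Hc eps He) as [N0 HN0];
    exists N0; intros; apply HN0; auto.
Qed.

Lemma picard_uniform (B : R) : 0 <= B -> exists N, forall t, Rabs t <= B -> forall n, (n >= N)%nat ->
  Rabs (picard_sol_x t - picard_x n t) + Rabs (picard_sol_y t - picard_y n t) <= 2 * picard_gap M L B n.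
Proof.
  intros HB. destruct (picard_cauchy B HB) as [N HN]. exists N. intros t Ht n Hn.
  apply Rle_plus_epsilon. intros eps He.
  destruct (picard_cv t) as [C1 C2].
  destruct (C1 (eps / 2) ltac:(lra)) as [N1 HN1]. destruct (C2 (eps / 2) ltac:(lra)) as [N2 HN2].
  set (p := max n (max N1 N2)).
  specialize (HN1 p ltac:(lia)). specialize (HN2 p ltac:(lia)). unfold R_dist in HN1, HN2.
  assert (A := HN t Ht n Hn (p - n)%nat). replace (n + (p - n))%nat with p in A by lia.
  pose proof (picard_gap_nonneg M L B p ltac:(lra) ltac:(lra) HB).
  pose proof (Rabs_triang3 (picard_sol_x t) (picard_x p t) (picard_x n t)).
  pose proof (Rabs_triang3 (picard_sol_y t) (picard_y p t) (picard_y n t)).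
  rewrite <- (Rabs_Ropp (picard_sol_x t - picard_x p t)), <- (Rabs_Ropp (picard_sol_y t - picard_y p t)) in *.
  replace (- (picard_sol_x t - picard_x p t)) with (picard_x p t - picard_sol_x t) in * by ring.
  replace (- (picard_sol_y t - picard_y p t)) with (picard_y p t - picard_sol_y t) in * by ring.
  lra.
Qed.

Lemma picard_uniform_near (t eps : R) : eps > 0 -> exists n, forall y, Rabs (y - t) <= 1 ->
  Rabs (picard_sol_x y - picard_x n y) <= eps /\ Rabs (picard_sol_y y - picard_y n y) <= eps.
Proof.
  intros He. set (B := Rabs t + 1). assert (HB : 0 <= B) by (unfold B; pose proof (Rabs_pos t); lra).
  destruct (picard_uniform B HB) as [N HN].
  destruct (picard_gap_small M L B (eps / 2) ltac:(lra) HL HB ltac:(lra)) as [N1 HN1].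
  exists (max N N1). intros y Hy. specialize (HN1 (max N N1) ltac:(lia)).
  assert (Rabs y <= B) by (unfold B; pose proof (Rabs_triang3 y t 0); rewrite !Rminus_0_r in *; lra).
  specialize (HN y H (max N N1) ltac:(lia)).
  pose proof (Rabs_pos (picard_sol_x y - picard_x (max N N1) y)).
  pose proof (Rabs_pos (picard_sol_y y - picard_y (max N N1) y)).
  lra.
Qed.

Lemma picard_sol_continuous (t : R) : continuity_pt picard_sol_x t /\ continuity_pt picard_sol_y t.
Proof.
  split.
  - apply (uniform_limit_continuous picard_x); [intros n; apply picard_iter_continuous|].
    intros eps He. destruct (picard_uniform_near t eps He) as [n Hn]. exists n. apply Hn.
  - apply (uniform_limit_continuous picard_y); [intros n; apply picard_iter_continuous|].
    intros eps He. destruct (picard_uniform_near t eps He) as [n Hn]. exists n. apply Hn.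
Qed.

Lemma picard_sol_field1_continuous (t : R) :
  continuity_pt (fun s => F1 (picard_sol_x s) (picard_sol_y s)) t.
Proof. eapply lipschitz2_comp_continuous; eauto; apply picard_sol_continuous. Qed.

Lemma picard_sol_field2_continuous (t : R) :
  continuity_pt (fun s => F2 (picard_sol_x s) (picard_sol_y s)) t.
Proof. eapply lipschitz2_comp_continuous; eauto; apply picard_sol_continuous. Qed.

Lemma picard_integral_cv (F : R -> R -> R) (t : R) : lipschitz2 F L ->
  (forall x, continuity_pt (fun s => F (picard_sol_x s) (picard_sol_y s)) x) ->
  (forall n x, continuity_pt (fun s => F (picard_x n s) (picard_y n s)) x) ->
  Un_cv (fun n => RInt (fun s => F (picard_x n s) (picard_y n s)) 0 t)
        (RInt (fun s => F (picard_sol_x s) (picard_sol_y s)) 0 t).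
Proof.
  intros HF Hc Hcn. set (B := Rabs t). assert (HB : 0 <= B) by apply Rabs_pos.
  destruct (picard_uniform B HB) as [N HN].
  assert (Hg := picard_gap_cv M L B ltac:(lra) HL HB).
  intros eps He.
  destruct (Hg (eps / (2 * L * (B + 1))) ltac:(apply Rdiv_lt_0_compat; nra)) as [N1 HN1].
  exists (max N N1). intros n Hn. unfold R_dist.
  specialize (HN1 n ltac:(lia)). unfold R_dist in HN1. rewrite Rminus_0_r in HN1.
  pose proof (picard_gap_nonneg M L B n ltac:(lra) ltac:(lra) HB).
  rewrite Rabs_right in HN1 by lra.
  rewrite <- RInt_minus_cont by auto.
  assert (I : Rabs (RInt (fun s => F (picard_x n s) (picard_y n s) - F (picard_sol_x s) (picard_sol_y s)) 0 t)
              <= L * (2 * picard_gap M L B n) * B).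
  { replace (L * (2 * picard_gap M L B n) * B)
      with (L * (2 * picard_gap M L B n) * Rabs t ^ 1 / INR (fact 1)) by (unfold B; simpl; field).
    apply RInt_monomial_bound; [intros x; apply continuity_pt_minus; auto | nra |].
    intros s Hs. simpl. rewrite Rmult_1_r, Rdiv_1_r. eapply Rle_trans; [apply HF|].
    apply Rmult_le_compat_l; [lra|].
    rewrite <- (Rabs_Ropp (picard_x n s - picard_sol_x s)), <- (Rabs_Ropp (picard_y n s - picard_sol_y s)).
    replace (- (picard_x n s - picard_sol_x s)) with (picard_sol_x s - picard_x n s) by ring.
    replace (- (picard_y n s - picard_sol_y s)) with (picard_sol_y s - picard_y n s) by ring.
    apply HN; [|lia]. unfold B, Rmin, Rmax in *. destruct Rle_dec; apply Rabs_le;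
      pose proof (Rle_abs t); pose proof (Rle_abs (- t)); rewrite Rabs_Ropp in *; lra. }
  eapply Rle_lt_trans; [apply I|].
  apply Rle_lt_trans with (L * (2 * (eps / (2 * L * (B + 1)))) * B).
  - apply Rmult_le_compat_r; [lra|]. apply Rmult_le_compat_l; lra.
  - replace (L * (2 * (eps / (2 * L * (B + 1)))) * B) with (eps * (B / (B + 1))) by (field; lra).
    assert (B / (B + 1) < 1) by (apply (Rmult_lt_reg_r (B + 1)); [lra|]; unfold Rdiv;
      rewrite Rmult_assoc, Rinv_l by lra; lra).
    nra.
Qed.

Lemma picard_sol_integral (t : R) :
  picard_sol_x t = x0 + RInt (fun s => F1 (picard_sol_x s) (picard_sol_y s)) 0 t /\
  picard_sol_y t = y0 + RInt (fun s => F2 (picard_sol_x s) (picard_sol_y s)) 0 t.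
Proof.
  destruct (picard_cv t) as [Cx Cy].
  assert (Sx : Un_cv (fun n => picard_x (S n) t) (picard_sol_x t)).
  { intros eps He. destruct (Cx eps He) as [N HN]. exists N. intros; apply HN; lia. }
  assert (Sy : Un_cv (fun n => picard_y (S n) t) (picard_sol_y t)).
  { intros eps He. destruct (Cy eps He) as [N HN]. exists N. intros; apply HN; lia. }
  split; eapply UL_sequence; try eassumption; [ | ].
  - apply (CV_plus (fun _ => x0)); [intros eps He; exists O; intros; unfold R_dist; rewrite Rminus_diag, Rabs_R0; lra|].
    apply picard_integral_cv; auto; [apply picard_sol_field1_continuous | apply picard_field1_continuous].
  - apply (CV_plus (fun _ => y0)); [intros eps He; exists O; intros; unfold R_dist; rewrite Rminus_diag, Rabs_R0; lra|].
    apply picard_integral_cv; auto; [apply picard_sol_field2_continuous | apply picard_field2_continuous].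
Qed.

End PicardLindelof.

Theorem picard_lindelof (F1 F2 : R -> R -> R) (x0 y0 : R) : tame F1 -> tame F2 ->
  exists th rh : R -> R, th 0 = x0 /\ rh 0 = y0 /\
    forall t, derivable_pt_lim th t (F1 (th t) (rh t)) /\ derivable_pt_lim rh t (F2 (th t) (rh t)).
Proof.
  intros [M1 [L1 [HM1 [HL1 [B1 H1]]]]] [M2 [L2 [HM2 [HL2 [B2 H2]]]]].
  set (M := M1 + M2 + 1). set (L := L1 + L2 + 1).
  assert (HM : 0 < M) by (unfold M; lra). assert (HL : 0 < L) by (unfold L; lra).
  assert (Hb : forall F Mi, 0 <= Mi -> Mi <= M -> bounded2 F Mi -> bounded2 F M).
  { intros F Mi _ HMi HF a b. specialize (HF a b). lra. }
  assert (Hl : forall F Li, 0 <= Li -> Li <= L -> lipschitz2 F Li -> lipschitz2 F L).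
  { intros F Li HLi0 HLi HF a b a' b'. specialize (HF a b a' b').
    pose proof (Rabs_pos (a - a')); pose proof (Rabs_pos (b - b')). nra. }
  assert (B1' : bounded2 F1 M) by (apply (Hb _ M1); auto; unfold M; lra).
  assert (B2' : bounded2 F2 M) by (apply (Hb _ M2); auto; unfold M; lra).
  assert (H1' : lipschitz2 F1 L) by (apply (Hl _ L1); auto; unfold L; lra).
  assert (H2' : lipschitz2 F2 L) by (apply (Hl _ L2); auto; unfold L; lra).
  assert (XI := picard_sol_integral F1 F2 x0 y0 M L HM HL B1' B2' H1' H2').
  assert (XC := picard_sol_continuous F1 F2 x0 y0 M L HM HL B1' B2' H1' H2').
  set (X := picard_sol_x F1 F2 x0 y0) in *. set (Y := picard_sol_y F1 F2 x0 y0) in *.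
  exists X, Y. split; [|split].
  - rewrite (proj1 (XI 0)), RInt_point. unfold zero; simpl; ring.
  - rewrite (proj2 (XI 0)), RInt_point. unfold zero; simpl; ring.
  - intros t. split.
    + apply (derivable_pt_lim_ext (fun t => x0 + RInt (fun s => F1 (X s) (Y s)) 0 t) X).
      { intros z; symmetry; apply (proj1 (XI z)). }
      apply (derivable_lim_RInt (fun s => F1 (X s) (Y s))). intros; apply (lipschitz2_comp_continuous F1 L X Y); auto; apply XC.
    + apply (derivable_pt_lim_ext (fun t => y0 + RInt (fun s => F2 (X s) (Y s)) 0 t) Y).
      { intros z; symmetry; apply (proj2 (XI z)). }
      apply (derivable_lim_RInt (fun s => F2 (X s) (Y s))). intros; apply (lipschitz2_comp_continuous F2 L X Y); auto; apply XC.
Qed.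

(** * Uniqueness and a priori bounds for planar ODEs *)

(** the inequality behind Gronwall: a Lipschitz field increases [|Delta|^2] at rate at most [4 L] *)
Lemma lipschitz_energy_rate (x y p q L : R) : 0 < L ->
  Rabs p <= L * (Rabs x + Rabs y) -> Rabs q <= L * (Rabs x + Rabs y) ->
  2 * x * p + 2 * y * q <= 4 * L * (x ^ 2 + y ^ 2).
Proof.
  intros HL Hp Hq. pose proof (Rabs_pos x); pose proof (Rabs_pos y).
  assert (x * p <= Rabs x * (L * (Rabs x + Rabs y))).
  { eapply Rle_trans; [apply Rle_abs|]. rewrite Rabs_mult. apply Rmult_le_compat_l; auto. }
  assert (y * q <= Rabs y * (L * (Rabs x + Rabs y))).
  { eapply Rle_trans; [apply Rle_abs|]. rewrite Rabs_mult. apply Rmult_le_compat_l; auto. }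
  assert (Rabs x * Rabs x = x ^ 2) by (rewrite <- Rabs_mult; simpl; rewrite Rmult_1_r; apply Rabs_right; nra).
  assert (Rabs y * Rabs y = y ^ 2) by (rewrite <- Rabs_mult; simpl; rewrite Rmult_1_r; apply Rabs_right; nra).
  assert ((Rabs x + Rabs y) ^ 2 <= 2 * (x ^ 2 + y ^ 2)) by (pose proof (pow2_ge_0 (Rabs x - Rabs y)); nra).
  assert (2 * L * (Rabs x + Rabs y) ^ 2 <= 2 * L * (2 * (x ^ 2 + y ^ 2))) by (apply Rmult_le_compat_l; lra).
  nra.
Qed.

Lemma solution_unique (F1 F2 : R -> R -> R) (T : R) (th1 rh1 th2 rh2 : R -> R) :
  tame F1 -> tame F2 -> 0 <= T ->
  (forall t, 0 <= t <= T -> derivable_pt_lim th1 t (F1 (th1 t) (rh1 t)) /\ derivable_pt_lim rh1 t (F2 (th1 t) (rh1 t))) ->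
  (forall t, 0 <= t <= T -> derivable_pt_lim th2 t (F1 (th2 t) (rh2 t)) /\ derivable_pt_lim rh2 t (F2 (th2 t) (rh2 t))) ->
  th1 0 = th2 0 -> rh1 0 = rh2 0 ->
  forall t, 0 <= t <= T -> th1 t = th2 t /\ rh1 t = rh2 t.
Proof.
  intros H1 H2 HT S1 S2 E1 E2.
  destruct (tame_lipschitz F1 H1) as [La [HLa Ha]]. destruct (tame_lipschitz F2 H2) as [Lb [HLb Hb]].
  set (L := La + Lb).
  (* the weighted energy [e(t) = |Delta(t)|^2 exp (- 4 L t)] is nonincreasing and vanishes at 0 *)
  set (dist2 := fun t => (th1 t - th2 t) ^ 2 + (rh1 t - rh2 t) ^ 2).
  set (e := fun t => dist2 t * exp (- (4 * L) * t)).
  set (e' := fun t => (2 * (th1 t - th2 t) * (F1 (th1 t) (rh1 t) - F1 (th2 t) (rh2 t)) +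
                       2 * (rh1 t - rh2 t) * (F2 (th1 t) (rh1 t) - F2 (th2 t) (rh2 t))) * exp (- (4 * L) * t)
                      + dist2 t * (exp (- (4 * L) * t) * (- (4 * L)))).
  assert (Hd : forall t, 0 <= t <= T -> derivable_pt_lim e t (e' t)).
  { intros t Ht. destruct (S1 t Ht) as [A1 B1]. destruct (S2 t Ht) as [A2 B2].
    apply (derivable_pt_lim_mult dist2 (fun t => exp (- (4 * L) * t))); [|apply derivable_lim_exp_lin].
    apply (derivable_pt_lim_plus (fun t => (th1 t - th2 t) ^ 2) (fun t => (rh1 t - rh2 t) ^ 2));
      apply derivable_lim_sq_diff; auto. }
  assert (Hs : forall t, 0 <= t <= T -> e' t <= 0).
  { intros t Ht. unfold e', dist2. pose proof (exp_pos (- (4 * L) * t)).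
    assert (Hrate := lipschitz_energy_rate (th1 t - th2 t) (rh1 t - rh2 t)
      (F1 (th1 t) (rh1 t) - F1 (th2 t) (rh2 t)) (F2 (th1 t) (rh1 t) - F2 (th2 t) (rh2 t)) L ltac:(unfold L; lra)).
    assert (Hab : forall u v, 0 <= u -> 0 <= v -> La * (u + v) <= L * (u + v) /\ Lb * (u + v) <= L * (u + v))
      by (intros; unfold L; split; nra).
    destruct (Hab (Rabs (th1 t - th2 t)) (Rabs (rh1 t - rh2 t)) (Rabs_pos _) (Rabs_pos _)).
    specialize (Hrate ltac:(eapply Rle_trans; [apply Ha | lra]) ltac:(eapply Rle_trans; [apply Hb | lra])).
    nra. }
  intros t Ht.
  assert (Hle := derive_nonpos_decr e e' 0 t ltac:(lra) ltac:(intros; apply Hd; lra) ltac:(intros; apply Hs; lra)).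
  assert (He0 : e 0 = 0) by (unfold e, dist2; rewrite E1, E2; ring).
  rewrite He0 in Hle. unfold e, dist2 in Hle. pose proof (exp_pos (- (4 * L) * t)).
  assert (Z : (th1 t - th2 t) ^ 2 + (rh1 t - rh2 t) ^ 2 <= 0) by (apply (Rmult_le_reg_r (exp (- (4 * L) * t))); auto; lra).
  pose proof (pow2_ge_0 (th1 t - th2 t)); pose proof (pow2_ge_0 (rh1 t - rh2 t)).
  split; apply Rminus_diag_uniq; apply Rsqr_0_uniq; unfold Rsqr; simpl in *; lra.
Qed.

Lemma continuous_bootstrap (g : R -> R) (b k : R) : 0 <= b -> 0 < k ->
  (forall t, 0 <= t <= b -> continuity_pt g t) -> Rabs (g 0) <= k ->
  (forall t, 0 <= t <= b -> (forall s, 0 <= s <= t -> Rabs (g s) <= 2 * k) -> Rabs (g t) <= k) ->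
  forall t, 0 <= t <= b -> Rabs (g t) <= k.
Proof.
  intros Hb Hk Hc Hg0 Hstep.
  (* [tau] = supremum of the times up to which [|g| <= 2 k] *)
  set (E := fun t => 0 <= t <= b /\ forall s, 0 <= s <= t -> Rabs (g s) <= 2 * k).
  assert (E0 : E 0) by (split; [lra|]; intros s Hs; replace s with 0 by lra; lra).
  assert (Eb : bound E) by (exists b; intros x [Hx _]; lra).
  destruct (completeness E Eb (ex_intro _ 0 E0)) as [tau [Hub Hlub]].
  assert (Ht0 : 0 <= tau) by (apply Hub; auto).
  assert (Htb : tau <= b) by (apply Hlub; intros x [Hx _]; lra).
  assert (Below : forall s, 0 <= s < tau -> Rabs (g s) <= 2 * k).
  { intros s Hs. apply NNPP. intros Hn.
    assert (is_upper_bound E s).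
    { intros x [Hx Hx']. destruct (Rle_or_lt x s) as [|Hlt]; auto. exfalso. apply Hn, Hx'. lra. }
    specialize (Hlub s H). lra. }
  assert (Atau : Rabs (g tau) <= 2 * k).
  { destruct (Req_dec tau 0) as [->|Hne]; [lra|].
    apply Rnot_lt_le. intros Hlt.
    destruct (continuity_pt_eps g tau (Hc tau ltac:(lra)) (Rabs (g tau) - 2 * k) ltac:(lra)) as [d [Hd Hd']].
    set (s := Rmax 0 (tau - d / 2)).
    assert (0 <= s < tau) by (unfold s, Rmax; destruct Rle_dec; lra).
    assert (Rabs (s - tau) < d) by (unfold s, Rmax; destruct Rle_dec; apply Rabs_def1; lra).
    specialize (Hd' s H0). specialize (Below s H).
    pose proof (Rabs_triang_inv (g tau) (g s)). rewrite <- (Rabs_Ropp (g s - g tau)) in Hd'.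
    replace (- (g s - g tau)) with (g tau - g s) in Hd' by ring. lra. }
  assert (Etau : forall s, 0 <= s <= tau -> Rabs (g s) <= k).
  { intros s Hs. apply Hstep; [lra|]. intros u Hu.
    destruct (Req_dec u tau) as [->|]; [auto | apply Below; lra]. }
  (* if [tau < b], continuity at [tau] would push the bound beyond [tau] *)
  assert (Htau : tau = b).
  { destruct (Req_dec tau b); auto. exfalso.
    assert (Hg : Rabs (g tau) <= k) by (apply Etau; lra).
    destruct (continuity_pt_eps g tau (Hc tau ltac:(lra)) k Hk) as [d [Hd Hd']].
    set (s := Rmin b (tau + d / 2)).
    assert (tau < s <= b) by (unfold s, Rmin; destruct Rle_dec; lra).
    assert (E s).
    { split; [lra|]. intros u Hu. destruct (Rle_or_lt u tau); [pose proof (Etau u ltac:(lra)); lra|].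
      assert (Rabs (u - tau) < d) by (unfold s, Rmin in *; destruct Rle_dec; apply Rabs_def1; lra).
      specialize (Hd' u H2). pose proof (Rabs_triang_inv (g u) (g tau)). lra. }
    specialize (Hub s H1). lra. }
  intros t Ht. apply Etau. lra.
Qed.

Lemma gronwall_square_bounds (rh d : R -> R) (K r0 T : R) : 0 <= K -> rh 0 = r0 ->
  (forall t, 0 <= t <= T -> derivable_pt_lim rh t (d t) /\ Rabs (d t) <= K * Rabs (rh t)) ->
  forall t, 0 <= t <= T -> rh t ^ 2 <= r0 ^ 2 * exp (2 * K * t) /\ r0 ^ 2 * exp (- (2 * K) * t) <= rh t ^ 2.
Proof.
  intros HK H0 Hd t Ht.
  assert (Hp : forall t, 0 <= t <= T -> Rabs (rh t * d t) <= K * rh t ^ 2).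
  { intros u Hu. destruct (Hd u Hu) as [_ B]. rewrite Rabs_mult.
    replace (rh u ^ 2) with (Rabs (rh u) * Rabs (rh u)).
    - pose proof (Rabs_pos (rh u)). nra.
    - rewrite <- Rabs_mult. simpl. rewrite Rmult_1_r. apply Rabs_right. nra. }
  assert (Hdq : forall k u, 0 <= u <= T -> derivable_pt_lim (fun t => rh t ^ 2 * exp (k * t)) u
                  (2 * rh u * d u * exp (k * u) + rh u ^ 2 * (exp (k * u) * k))).
  { intros k u Hu. apply (derivable_pt_lim_mult (fun t => rh t ^ 2) (fun t => exp (k * t)));
      [apply derivable_lim_sq, Hd; lra | apply derivable_lim_exp_lin]. }
  assert (Hexp : forall k, exp (k * t) * exp (- k * t) = 1)
    by (intros; rewrite <- exp_plus; replace (k * t + - k * t) with 0 by ring; apply exp_0).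
  split.
  - assert (M : rh t ^ 2 * exp (- (2 * K) * t) <= rh 0 ^ 2 * exp (- (2 * K) * 0)).
    { apply (derive_nonpos_decr (fun t => rh t ^ 2 * exp (- (2 * K) * t))
        (fun u => 2 * rh u * d u * exp (- (2 * K) * u) + rh u ^ 2 * (exp (- (2 * K) * u) * - (2 * K))) 0 t ltac:(lra)); [intros; apply Hdq; lra|].
      intros u Hu. pose proof (exp_pos (- (2 * K) * u)). specialize (Hp u ltac:(lra)).
      pose proof (Rle_abs (rh u * d u)). assert (0 <= rh u ^ 2) by nra. nra. }
    rewrite H0, Rmult_0_r, exp_0 in M. pose proof (exp_pos (2 * K * t)). specialize (Hexp (2 * K)).
    nra.
  - assert (M : rh 0 ^ 2 * exp (2 * K * 0) <= rh t ^ 2 * exp (2 * K * t)).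
    { apply (derive_nonneg_incr (fun t => rh t ^ 2 * exp (2 * K * t))
        (fun u => 2 * rh u * d u * exp (2 * K * u) + rh u ^ 2 * (exp (2 * K * u) * (2 * K))) 0 t ltac:(lra)); [intros; apply Hdq; lra|].
      intros u Hu. pose proof (exp_pos (2 * K * u)). specialize (Hp u ltac:(lra)).
      pose proof (Rle_abs (- (rh u * d u))) as Hab. rewrite Rabs_Ropp in Hab. assert (0 <= rh u ^ 2) by nra. nra. }
    rewrite H0, Rmult_0_r, exp_0 in M. pose proof (exp_pos (- (2 * K) * t)). specialize (Hexp (2 * K)).
    nra.
Qed.

Lemma first_crossing (f : R -> R) (f' : R -> R) (a P T0 : R) : 0 < a -> 0 < P -> P <= a * T0 ->
  (forall t, derivable_pt_lim f t (f' t)) -> (forall t, 0 <= t <= T0 -> a <= f' t) -> f 0 = 0 ->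
  exists T, 0 < T <= T0 /\ f T = P /\ (forall t, 0 < t < T -> 0 < f t < P) /\
            (forall t, 0 <= t <= T -> 0 <= f t <= P).
Proof.
  intros Ha HP HT0 Hd Hlow H0.
  assert (LIN := derive_lower_bound_growth f f' a T0 ltac:(intros t Ht; split; [apply Hd | apply Hlow; auto])).
  assert (Hc : continuity (fun t => f t - P)) by (intros t; apply continuity_pt_minus;
    [eapply derivable_lim_continuous, Hd | apply continuity_pt_const; intros ? ?; reflexivity]).
  assert (HT0' : 0 <= T0) by nra.
  destruct (IVT_cor _ 0 T0 Hc HT0') as [T [HT HfT]].
  { specialize (LIN 0 T0 ltac:(lra) ltac:(lra)). rewrite H0 in *. nra. }
  assert (HfT' : f T = P) by lra.
  assert (HTpos : 0 < T) by (destruct (Req_dec T 0) as [->|]; [rewrite H0 in HfT'; lra | lra]).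
  assert (Int : forall t, 0 < t < T -> 0 < f t < P).
  { intros t Ht. pose proof (LIN 0 t ltac:(lra) ltac:(lra)). pose proof (LIN t T ltac:(lra) ltac:(lra)).
    rewrite H0 in *. split; nra. }
  exists T. split; [lra|]. split; [exact HfT'|]. split; [exact Int|].
  intros t Ht. destruct (Req_dec t 0) as [->|]; [lra|]. destruct (Req_dec t T) as [->|]; [lra|].
  pose proof (Int t ltac:(lra)). lra.
Qed.

(** * The compactified field near [S^1] *)

Definition theta_poly (Z : pvf) (m : nat) (th rho : R) : R := sum_f_R0 (fun j => rho ^ (m - j) * Afun Z j th) m.
Definition rho_poly (Z : pvf) (m : nat) (th rho : R) : R := sum_f_R0 (fun j => rho ^ (m - j) * Rfun Z j th) m.
Definition cfactor (m : nat) (rho : R) : R := (/ sqrt (1 + rho ^ 2)) ^ (m - 1).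

Lemma PX_decomposition (m : nat) (Z : pvf) (th rho : R) :
  PX m Z th rho = (theta_poly Z m th rho * cfactor m rho, - rho * rho_poly Z m th rho * cfactor m rho).
Proof.
  unfold PX, cfactor, theta_poly, rho_poly. rewrite pow_inv. f_equal. unfold Rdiv. f_equal.
  assert (E : sum_f_R0 (fun j => rho ^ (m + 1 - j) * Rfun Z j th) m
              = rho * sum_f_R0 (fun j => rho ^ (m - j) * Rfun Z j th) m).
  { rewrite scal_sum. apply sum_eq. intros i Hi. replace (m + 1 - i)%nat with (S (m - i)) by lia. simpl. ring. }
  rewrite E. ring.
Qed.

Lemma cfactor_pos (m : nat) (rho : R) : 0 < cfactor m rho.
Proof. unfold cfactor. apply pow_lt, inv_sqrt_bound. Qed.

Lemma top_degree_at_0 (f : nat -> R) (m : nat) : sum_f_R0 (fun j => 0 ^ (m - j) * f j) m = f m.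
Proof.
  destruct m as [|m]; [simpl; ring|].
  rewrite tech5, Nat.sub_diag. simpl pow at 2.
  rewrite (sum_eq _ (fun _ => 0)); [rewrite sum_cte; ring|].
  intros i Hi. replace (S m - i)%nat with (S (m - i)) by lia. simpl. ring.
Qed.

Lemma theta_poly_0 (Z : pvf) (m : nat) (th : R) : theta_poly Z m th 0 = Afun Z m th.
Proof. apply (top_degree_at_0 (fun j => Afun Z j th)). Qed.

Lemma rho_poly_0 (Z : pvf) (m : nat) (th : R) : rho_poly Z m th 0 = Rfun Z m th.
Proof. apply (top_degree_at_0 (fun j => Rfun Z j th)). Qed.

Lemma cfactor_0 (m : nat) : cfactor m 0 = 1.
Proof. unfold cfactor. replace (1 + 0 ^ 2) with 1 by ring. rewrite sqrt_1, Rinv_1, pow1. reflexivity. Qed.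

Lemma PX_on_circle (m : nat) (Z : pvf) (th : R) : PX m Z th 0 = (Afun Z m th, 0).
Proof. rewrite PX_decomposition, theta_poly_0, cfactor_0. f_equal; ring. Qed.

Lemma Lf_on_circle (m : nat) (Z : pvf) (th : R) : Lf (PX m Z) th 0 = Afun Z m th * cos th.
Proof. unfold Lf. rewrite PX_on_circle. simpl. replace (1 + 0 * (0 * 1)) with 1 by ring. rewrite sqrt_1. field. Qed.

Lemma tame_hom (c : nat -> nat -> R) (k : nat) : tame (fun a _ => hom c k (cos a) (sin a)).
Proof.
  unfold hom. apply (tame_sum (fun i a b => c i (k - i)%nat * cos a ^ i * sin a ^ (k - i))).
  intros i _. apply tame_mult; [apply tame_mult; [apply tame_const|] |].
  - apply (tame_pow (fun a _ => cos a)), tame_cos.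
  - apply (tame_pow (fun a _ => sin a)), tame_sin.
Qed.

Lemma tame_Afun (Z : pvf) (j : nat) : tame (fun a _ => Afun Z j a).
Proof.
  unfold Afun.
  apply (tame_plus (fun a _ => hom (cQ Z) j (cos a) (sin a) * cos a) (fun a _ => - (hom (cP Z) j (cos a) (sin a) * sin a))).
  - apply tame_mult; [apply tame_hom | apply tame_cos].
  - apply tame_opp, tame_mult; [apply tame_hom | apply tame_sin].
Qed.

Lemma tame_Rfun (Z : pvf) (j : nat) : tame (fun a _ => Rfun Z j a).
Proof. unfold Rfun. apply tame_plus; apply tame_mult; try apply tame_hom; [apply tame_cos | apply tame_sin]. Qed.

Lemma Afun_continuous (Z : pvf) (m : nat) (x : R) : continuity_pt (fun a => Afun Z m a) x.
Proof. apply (tame_continuous_fst (fun a _ => Afun Z m a) 0 x), tame_Afun. Qed.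

Lemma Rfun_continuous (Z : pvf) (m : nat) (x : R) : continuity_pt (fun a => Rfun Z m a) x.
Proof. apply (tame_continuous_fst (fun a _ => Rfun Z m a) 0 x), tame_Rfun. Qed.

Lemma tame_theta_poly (Z : pvf) (m : nat) (d : R) : 0 <= d -> tame (fun a b => theta_poly Z m a (clamp (- d) d b)).
Proof.
  intros Hd. unfold theta_poly. apply (tame_sum (fun j a b => clamp (- d) d b ^ (m - j) * Afun Z j a)).
  intros. apply tame_mult; [apply (tame_pow (fun _ b => clamp (- d) d b)), tame_clamp_snd; auto | apply tame_Afun].
Qed.

Lemma tame_rho_poly (Z : pvf) (m : nat) (d : R) : 0 <= d -> tame (fun a b => rho_poly Z m a (clamp (- d) d b)).
Proof.
  intros Hd. unfold rho_poly. apply (tame_sum (fun j a b => clamp (- d) d b ^ (m - j) * Rfun Z j a)).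
  intros. apply tame_mult; [apply (tame_pow (fun _ b => clamp (- d) d b)), tame_clamp_snd; auto | apply tame_Rfun].
Qed.

Lemma tame_cfactor (m : nat) (d : R) : 0 <= d -> tame (fun _ b => cfactor m (clamp (- d) d b)).
Proof. intros Hd. unfold cfactor. apply (tame_pow (fun _ b => / sqrt (1 + clamp (- d) d b ^ 2))), tame_inv_sqrt; auto. Qed.

(** The compactified field with [theta] clamped to [[lo, hi]] and [rho] to [[-d, d]]:
    a tame field which coincides with [P(X)] on the strip where the orbits of interest live. *)
Definition clamped_PX1 (m : nat) (Z : pvf) (lo hi d a b : R) : R := fst (PX m Z (clamp lo hi a) (clamp (- d) d b)).
Definition clamped_PX2 (m : nat) (Z : pvf) (lo hi d a b : R) : R := snd (PX m Z (clamp lo hi a) (clamp (- d) d b)).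

Lemma tame_clamped_PX1 (m : nat) (Z : pvf) (lo hi d : R) : 0 <= d -> tame (clamped_PX1 m Z lo hi d).
Proof.
  intros Hd.
  apply (tame_ext (fun a b => theta_poly Z m (clamp lo hi a) (clamp (- d) d b) * cfactor m (clamp (- d) d b))).
  { intros; unfold clamped_PX1; rewrite PX_decomposition; reflexivity. }
  apply (tame_clamp_fst (fun a b => theta_poly Z m a (clamp (- d) d b) * cfactor m (clamp (- d) d b))).
  apply tame_mult; [apply tame_theta_poly | apply tame_cfactor]; auto.
Qed.

Lemma tame_clamped_PX2 (m : nat) (Z : pvf) (lo hi d : R) : 0 <= d -> tame (clamped_PX2 m Z lo hi d).
Proof.
  intros Hd.
  apply (tame_ext (fun a b => - clamp (- d) d b * rho_poly Z m (clamp lo hi a) (clamp (- d) d b) * cfactor m (clamp (- d) d b))).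
  { intros; unfold clamped_PX2; rewrite PX_decomposition; reflexivity. }
  apply (tame_clamp_fst (fun a b => - clamp (- d) d b * rho_poly Z m a (clamp (- d) d b) * cfactor m (clamp (- d) d b))).
  apply tame_mult; [apply tame_mult; [apply tame_opp, tame_clamp_snd | apply tame_rho_poly] | apply tame_cfactor]; auto.
Qed.

(** * One half turn along [S^1] *)

Lemma sign_square (s : R) : (s = 1 \/ s = -1) -> s * s = 1 /\ Rabs s = 1.
Proof. intros [->| ->]; split; try ring; [apply Rabs_R1 | rewrite Rabs_left; lra]. Qed.

Lemma sector_interval (al s x : R) : (s = 1 \/ s = -1) ->
  (Rmin al (al + s * PI) <= x <= Rmax al (al + s * PI) <-> 0 <= s * (x - al) <= PI).
Proof.
  intros Hs. pose proof PI_RGT_0. destruct Hs as [-> | ->].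
  - rewrite Rmin_left, Rmax_right by lra. split; intros; lra.
  - rewrite Rmin_right, Rmax_left by lra. split; intros; lra.
Qed.

Lemma sector_interval_strict (al s x : R) : (s = 1 \/ s = -1) ->
  (Rmin al (al + s * PI) < x < Rmax al (al + s * PI) <-> 0 < s * (x - al) < PI).
Proof.
  intros Hs. pose proof PI_RGT_0. destruct Hs as [-> | ->].
  - rewrite Rmin_left, Rmax_right by lra. split; intros; lra.
  - rewrite Rmin_right, Rmax_left by lra. split; intros; lra.
Qed.

Lemma clamp_unit_id (x : R) : Rabs x <= 1 -> clamp (-1) 1 x = x.
Proof. apply (clamp_sym_id 1 x). Qed.

Lemma tame_vanishing_on_circle (f : R -> R -> R) :
  tame (fun a b => f a (clamp (-1) 1 b)) -> (forall a, f a 0 = 0) ->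
  exists L, 0 < L /\ forall a rho, Rabs rho <= 1 -> Rabs (f a rho) <= L * Rabs rho.
Proof.
  intros Hf H0. destruct (tame_lipschitz _ Hf) as [L [HL HLip]]. exists L. split; auto.
  intros a rho Hr. specialize (HLip a rho a 0). simpl in HLip.
  rewrite (clamp_unit_id rho), (clamp_unit_id 0), H0, Rminus_0_r, Rminus_0_r in HLip by (auto; rewrite Rabs_R0; lra).
  rewrite Rminus_diag, Rabs_R0, Rplus_0_l in HLip. exact HLip.
Qed.

(** The algebraic heart of the log estimate: along [P(X)],
    [(ln rho)' + (R_m / A_m) theta' = cfactor (R_m theta_poly - A_m rho_poly) / A_m], which is
    [O(rho)] times the angular speed. *)
Lemma log_rate_bound (A Rr p1 p2 i rho s c LQ rb : R) : Rabs s = 1 -> 0 < c -> 0 <= LQ ->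
  2 * c <= s * A -> c <= s * p1 -> 0 < i -> 0 < rho <= rb ->
  Rabs (Rr * p1 - A * p2) <= LQ * rho ->
  Rabs (/ rho * (- rho * p2 * i) + Rr / A * (p1 * i)) <= LQ * rb / (2 * c ^ 2) * (s * (p1 * i)).
Proof.
  intros Has Hc HLQ HA Hp1 Hi Hrho HQ.
  assert (HAabs : 2 * c <= Rabs A)
    by (rewrite <- Rmult_1_l, <- Has, <- Rabs_mult; eapply Rle_trans; [apply HA | apply Rle_abs]).
  assert (HA0 : A <> 0) by (intro Hz; rewrite Hz, Rabs_R0 in HAabs; lra).
  replace (/ rho * (- rho * p2 * i) + Rr / A * (p1 * i)) with (i * (Rr * p1 - A * p2) / A) by (field; lra).
  unfold Rdiv. rewrite !Rabs_mult, Rabs_inv, (Rabs_right i) by lra.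
  assert (/ Rabs A <= / (2 * c)) by (apply Rinv_le_contravar; lra).
  assert (0 < / Rabs A) by (apply Rinv_0_lt_compat; lra).
  pose proof (Rabs_pos (Rr * p1 - A * p2)).
  assert (Rabs (Rr * p1 - A * p2) <= LQ * rb) by nra.
  assert (i * Rabs (Rr * p1 - A * p2) * / Rabs A <= i * (LQ * rb) * / (2 * c))
    by (apply Rmult_le_compat; try nra; apply Rmult_le_compat_l; lra).
  assert (Hk : 0 <= LQ * rb / (2 * c ^ 2)) by (apply Rmult_le_pos; [nra | left; apply Rinv_0_lt_compat; nra]).
  assert (c * i <= s * (p1 * i)) by nra.
  apply Rle_trans with (i * (LQ * rb) * / (2 * c)); [assumption|].
  replace (i * (LQ * rb) * / (2 * c)) with (LQ * rb / (2 * c ^ 2) * (c * i)) by (field; lra).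
  apply Rmult_le_compat_l; assumption.
Qed.

Section HalfTurn.

Variables (m : nat) (Z : pvf) (al s c : R).
Hypotheses (Hs : s = 1 \/ s = -1) (Hc : 0 < c).
Hypothesis HA : forall th, 0 <= s * (th - al) <= PI -> 2 * c <= s * Afun Z m th.

Lemma half_turn_constants : exists d1 LQ K, 0 < d1 <= 1 /\ 0 < LQ /\ 0 <= K /\
  (forall a rho, 0 <= s * (a - al) <= PI -> Rabs rho <= d1 -> c <= s * theta_poly Z m a rho) /\
  (forall rho, Rabs rho <= d1 -> / 2 <= cfactor m rho) /\
  (forall a rho, Rabs rho <= 1 -> Rabs (rho_poly Z m a rho * cfactor m rho) <= K) /\
  (forall a rho, Rabs rho <= 1 ->
     Rabs (Rfun Z m a * theta_poly Z m a rho - Afun Z m a * rho_poly Z m a rho) <= LQ * Rabs rho).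
Proof.
  destruct (sign_square s Hs) as [Hss Has].
  destruct (tame_vanishing_on_circle (fun a rho => theta_poly Z m a rho - Afun Z m a)) as [L1 [HL1 P1b]].
  { apply tame_plus; [apply tame_theta_poly; lra | apply tame_opp, tame_Afun]. }
  { intros a. rewrite theta_poly_0. ring. }
  destruct (tame_vanishing_on_circle (fun _ rho => cfactor m rho - 1)) as [L2 [HL2 iSb]].
  { apply tame_plus; [apply tame_cfactor; lra | apply tame_const]. }
  { intros a. rewrite cfactor_0. ring. }
  destruct (tame_vanishing_on_circle
    (fun a rho => Rfun Z m a * theta_poly Z m a rho - Afun Z m a * rho_poly Z m a rho)) as [LQ [HLQ Qb]].
  { apply tame_plus; [apply tame_mult; [apply tame_Rfun | apply tame_theta_poly; lra]|].
    apply tame_opp, tame_mult; [apply tame_Afun | apply tame_rho_poly; lra]. }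
  { intros a. rewrite theta_poly_0, rho_poly_0. ring. }
  destruct (tame_bounded (fun a b => rho_poly Z m a (clamp (-1) 1 b) * cfactor m (clamp (-1) 1 b))) as [K [HK HKb]].
  { apply tame_mult; [apply tame_rho_poly | apply tame_cfactor]; lra. }
  set (d1 := Rmin 1 (Rmin (c / L1) (/ (2 * L2)))).
  assert (Hd1 : 0 < d1)
    by (unfold d1; repeat apply Rmin_pos; try lra; [apply Rdiv_lt_0_compat | apply Rinv_0_lt_compat]; lra).
  assert (Hd1c : L1 * d1 <= c).
  { assert (d1 <= c / L1) by (eapply Rle_trans; [apply Rmin_r | apply Rmin_l]).
    apply (Rmult_le_compat_l L1) in H; [|lra]. replace (L1 * (c / L1)) with c in H by (field; lra). exact H. }
  assert (Hd1L : L2 * d1 <= / 2).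
  { assert (d1 <= / (2 * L2)) by (eapply Rle_trans; [apply Rmin_r | apply Rmin_r]).
    apply (Rmult_le_compat_l L2) in H; [|lra]. replace (L2 * / (2 * L2)) with (/ 2) in H by (field; lra). exact H. }
  assert (Hd11 : d1 <= 1) by apply Rmin_l.
  exists d1, LQ, K. repeat split; auto; try lra.
  - intros a rho Ha Hr. specialize (HA a Ha). specialize (P1b a rho ltac:(lra)).
    assert (Rabs (s * (theta_poly Z m a rho - Afun Z m a)) <= c) by (rewrite Rabs_mult, Has; nra).
    pose proof (Rle_abs (- (s * (theta_poly Z m a rho - Afun Z m a)))). rewrite Rabs_Ropp in H0. nra.
  - intros rho Hr. specialize (iSb 0 rho ltac:(lra)).
    pose proof (Rle_abs (- (cfactor m rho - 1))). rewrite Rabs_Ropp in H. nra.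
  - intros a rho Hr. specialize (HKb a rho). cbv beta in HKb. rewrite (clamp_unit_id rho Hr) in HKb. exact HKb.
Qed.

Variables (d1 LQ K : R).
Hypotheses (Hd1 : 0 < d1 <= 1) (HLQ : 0 < LQ) (HK : 0 <= K).
Hypothesis theta_speed : forall a rho, 0 <= s * (a - al) <= PI -> Rabs rho <= d1 -> c <= s * theta_poly Z m a rho.
Hypothesis cfactor_half : forall rho, Rabs rho <= d1 -> / 2 <= cfactor m rho.
Hypothesis radial_rate : forall a rho, Rabs rho <= 1 -> Rabs (rho_poly Z m a rho * cfactor m rho) <= K.
Hypothesis log_defect : forall a rho, Rabs rho <= 1 ->
  Rabs (Rfun Z m a * theta_poly Z m a rho - Afun Z m a * rho_poly Z m a rho) <= LQ * Rabs rho.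

Definition sector_lo : R := Rmin al (al + s * PI).
Definition sector_hi : R := Rmax al (al + s * PI).
Definition ht_field1 : R -> R -> R := clamped_PX1 m Z sector_lo sector_hi d1.
Definition ht_field2 : R -> R -> R := clamped_PX2 m Z sector_lo sector_hi d1.

Lemma ht_field1_tame : tame ht_field1.
Proof. apply tame_clamped_PX1. lra. Qed.

Lemma ht_field2_tame : tame ht_field2.
Proof. apply tame_clamped_PX2. lra. Qed.

Lemma sector_lo_hi : sector_lo <= sector_hi.
Proof. unfold sector_lo, sector_hi. apply Rle_trans with al; [apply Rmin_l | apply Rmax_l]. Qed.

Lemma ht_field_theta_speed (a b : R) : c / 2 <= s * ht_field1 a b.
Proof.
  unfold ht_field1, clamped_PX1. rewrite PX_decomposition. simpl.
  assert (Ha : 0 <= s * (clamp sector_lo sector_hi a - al) <= PI)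
    by (apply sector_interval, clamp_in, sector_lo_hi; auto).
  destruct (clamp_sym_abs d1 b ltac:(lra)) as [_ Hr].
  specialize (theta_speed _ _ Ha Hr). specialize (cfactor_half _ Hr).
  rewrite <- Rmult_assoc. nra.
Qed.

Lemma ht_field_radial_rate (a b : R) : Rabs (ht_field2 a b) <= K * Rabs b.
Proof.
  unfold ht_field2, clamped_PX2. rewrite PX_decomposition. simpl.
  set (r := clamp (- d1) d1 b). destruct (clamp_sym_abs d1 b ltac:(lra)) as [Hrb Hrd]. fold r in Hrb, Hrd.
  specialize (radial_rate (clamp sector_lo sector_hi a) r ltac:(lra)).
  replace (- r * rho_poly Z m (clamp sector_lo sector_hi a) r * cfactor m r)
    with (- r * (rho_poly Z m (clamp sector_lo sector_hi a) r * cfactor m r)) by ring.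
  rewrite Rabs_mult, Rabs_Ropp. pose proof (Rabs_pos r). pose proof (Rabs_pos b). nra.
Qed.

Lemma ht_field_unclamped (a b : R) : 0 <= s * (a - al) <= PI -> Rabs b <= d1 ->
  ht_field1 a b = fst (PX m Z a b) /\ ht_field2 a b = snd (PX m Z a b).
Proof.
  intros Ha Hb. unfold ht_field1, ht_field2, clamped_PX1, clamped_PX2.
  rewrite (clamp_id sector_lo sector_hi a) by (apply sector_interval; auto).
  rewrite clamp_sym_id by auto. split; reflexivity.
Qed.

(** the factor by which [rho] may grow during the time [2 pi / c] needed for a half turn *)
Definition ht_growth : R := exp (K * (2 * PI / c)).

Lemma ht_growth_ge1 : 1 <= ht_growth.
Proof.
  unfold ht_growth. rewrite <- exp_0. apply exp_le_compat. pose proof PI_RGT_0.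
  apply Rmult_le_pos; [lra | apply Rlt_le, Rdiv_lt_0_compat; lra].
Qed.

Lemma ht_orbit (r0 : R) : 0 <= r0 -> r0 * ht_growth < d1 / 2 ->
  exists T th rh, 0 < T /\ is_sol (PX m Z) th rh T /\ th 0 = al /\ rh 0 = r0 /\ th T = al + s * PI /\
    (forall t, 0 < t < T -> 0 < s * (th t - al) < PI) /\
    (forall t, 0 <= t <= T -> 0 <= s * (th t - al) <= PI) /\
    (forall t, 0 <= t <= T -> Rabs (rh t) <= r0 * ht_growth) /\
    (0 < r0 -> forall t, 0 <= t <= T -> 0 < rh t).
Proof.
  intros Hr0 Hsmall. destruct (sign_square s Hs) as [Hss _]. pose proof PI_RGT_0. pose proof ht_growth_ge1.
  destruct (picard_lindelof ht_field1 ht_field2 al r0 ht_field1_tame ht_field2_tame) as [th [rh [Hth0 [Hrh0 Hsol]]]].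
  set (T0 := 2 * PI / c).
  assert (HT0 : 0 < T0) by (unfold T0; apply Rdiv_lt_0_compat; lra).
  assert (SQ := gronwall_square_bounds rh (fun t => ht_field2 (th t) (rh t)) K r0 T0 HK Hrh0
                  ltac:(intros t _; split; [apply Hsol | apply ht_field_radial_rate])).
  assert (RB : forall t, 0 <= t <= T0 -> Rabs (rh t) <= r0 * ht_growth).
  { intros t Ht. destruct (SQ t Ht) as [A _].
    assert (exp (2 * K * t) <= ht_growth ^ 2).
    { unfold ht_growth. simpl. rewrite Rmult_1_r, <- exp_plus. apply exp_le_compat. fold T0. nra. }
    rewrite <- pow2_abs in A. pose proof (Rabs_pos (rh t)).
    assert (Hsq : Rabs (rh t) ^ 2 <= (r0 * ht_growth) ^ 2).
    { rewrite Rpow_mult_distr. eapply Rle_trans; [apply A|]. apply Rmult_le_compat_l; [nra | auto]. }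
    assert (0 <= r0 * ht_growth) by nra. nra. }
  destruct (first_crossing (fun t => s * (th t - al)) (fun t => s * ht_field1 (th t) (rh t)) (c / 2) PI T0)
    as [T [HT [HthT [Int Clo]]]]; try lra.
  { unfold T0. right. field. lra. }
  { intros t. replace (s * ht_field1 (th t) (rh t)) with (s * (ht_field1 (th t) (rh t) - 0)) by ring.
    apply derivable_pt_lim_scal, derivable_pt_lim_minus; [apply Hsol | apply derivable_pt_lim_const]. }
  { intros t _. apply ht_field_theta_speed. }
  { simpl. rewrite Hth0. ring. }
  cbv beta in HthT, Int, Clo.
  assert (Hsol' : is_sol (PX m Z) th rh T).
  { intros t Ht. destruct (ht_field_unclamped (th t) (rh t) (Clo t Ht) ltac:(specialize (RB t ltac:(lra)); lra)) as [E1 E2].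
    rewrite <- E1, <- E2. apply Hsol. }
  exists T, th, rh. split; [lra|]. do 3 (split; [auto|]).
  split; [|split; [exact Int|split; [exact Clo|split]]].
  - replace (th T) with (al + s * (s * (th T - al))) by (rewrite <- Rmult_assoc, Hss; ring). rewrite HthT. ring.
  - intros t Ht. apply RB. lra.
  - intros Hr t Ht. apply (continuous_nonvanishing_pos rh T); [intros; eapply derivable_lim_continuous, Hsol | lra | |lra].
    intros u Hu Hz. destruct (SQ u ltac:(lra)) as [_ B]. rewrite Hz in B.
    pose proof (exp_pos (- (2 * K) * u)). assert (0 < r0 ^ 2) by (apply pow_lt; lra). simpl in B. nra.
Qed.

(** Along a positive half-turn orbit inside the strip, [ln rho + Phi(theta)] is almost constant,
    where [Phi' = R_m / A_m] on the sector. *)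
Lemma ht_log_estimate (Phi g : R -> R) (T rb : R) (th rh : R -> R) :
  (forall x, derivable_pt_lim Phi x (g x)) ->
  (forall th, 0 <= s * (th - al) <= PI -> g th = Rfun Z m th / Afun Z m th) ->
  0 <= T -> rb <= d1 -> is_sol (PX m Z) th rh T ->
  (forall t, 0 <= t <= T -> 0 <= s * (th t - al) <= PI) -> (forall t, 0 <= t <= T -> 0 < rh t <= rb) ->
  Rabs (ln (rh T) - ln (rh 0) + (Phi (th T) - Phi (th 0))) <= LQ * rb / (2 * c ^ 2) * (s * th T - s * th 0).
Proof.
  intros HPhi Hg HT Hrb Hsol Hsec Hpos. destruct (sign_square s Hs) as [_ Has].
  set (ka := LQ * rb / (2 * c ^ 2)).
  set (V := fun t => ln (rh t) + Phi (th t)).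
  set (V' := fun t => / rh t * snd (PX m Z (th t) (rh t)) + g (th t) * fst (PX m Z (th t) (rh t))).
  set (W' := fun t => s * fst (PX m Z (th t) (rh t))).
  assert (DV : forall t, 0 <= t <= T -> derivable_pt_lim V t (V' t)).
  { intros t Ht. destruct (Hsol t Ht) as [D1 D2].
    apply (derivable_pt_lim_plus (fun t => ln (rh t)) (fun t => Phi (th t))).
    - apply (derivable_pt_lim_comp rh ln t _ _ D2 (derivable_pt_lim_ln (rh t) ltac:(apply Hpos; auto))).
    - apply (derivable_pt_lim_comp th Phi t _ _ D1 (HPhi (th t))). }
  assert (DW : forall t, 0 <= t <= T -> derivable_pt_lim (fun t => s * th t) t (W' t))
    by (intros; apply derivable_pt_lim_scal, Hsol; auto).
  assert (BV : forall t, 0 <= t <= T -> Rabs (V' t) <= ka * W' t).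
  { intros t Ht. unfold V', W', ka. rewrite PX_decomposition, (Hg (th t) (Hsec t Ht)). simpl.
    destruct (Hpos t Ht) as [Hp Hb].
    apply (log_rate_bound _ _ _ _ _ _ s c LQ rb Has Hc ltac:(lra)).
    - apply HA, Hsec; auto.
    - apply theta_speed; [apply Hsec; auto | rewrite Rabs_right; lra].
    - apply cfactor_pos.
    - lra.
    - replace (LQ * rh t) with (LQ * Rabs (rh t)) by (rewrite Rabs_right; lra).
      apply log_defect. rewrite Rabs_right; lra. }
  assert (U1 : V T - ka * (s * th T) <= V 0 - ka * (s * th 0)).
  { apply (derive_nonpos_decr (fun t => V t - ka * (s * th t)) (fun t => V' t - ka * W' t) 0 T HT).
    - intros t Ht. apply derivable_pt_lim_minus; [auto | apply (derivable_pt_lim_scal (fun t => s * th t)); auto].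
    - intros t Ht. specialize (BV t Ht). pose proof (Rle_abs (V' t)). lra. }
  assert (U2 : V 0 + ka * (s * th 0) <= V T + ka * (s * th T)).
  { apply (derive_nonneg_incr (fun t => V t + ka * (s * th t)) (fun t => V' t + ka * W' t) 0 T HT).
    - intros t Ht. apply derivable_pt_lim_plus; [auto | apply (derivable_pt_lim_scal (fun t => s * th t)); auto].
    - intros t Ht. specialize (BV t Ht). pose proof (Rle_abs (- V' t)). rewrite Rabs_Ropp in H. lra. }
  unfold V in U1, U2. apply Rabs_le. split; nra.
Qed.

Lemma ht_clamped_solution (T : R) (th rh : R -> R) : is_sol (PX m Z) th rh T ->
  (forall t, 0 <= t <= T -> 0 <= s * (th t - al) <= PI) -> (forall t, 0 <= t <= T -> Rabs (rh t) <= d1) ->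
  forall t, 0 <= t <= T ->
    derivable_pt_lim th t (ht_field1 (th t) (rh t)) /\ derivable_pt_lim rh t (ht_field2 (th t) (rh t)).
Proof.
  intros Hsol Hsec Hb t Ht. destruct (ht_field_unclamped (th t) (rh t) (Hsec t Ht) (Hb t Ht)) as [-> ->].
  apply Hsol; auto.
Qed.

(** The half-turn arc from [(al, r0)] is unique: another arc agrees with ours as long as it
    stays in the strip, hence (bootstrap) always, and both end on the same ray. *)
Lemma ht_arc_unique (r0 r1 T : R) (th rh : R -> R) :
  0 < T -> is_sol (PX m Z) th rh T -> th 0 = al -> rh 0 = r0 -> th T = al + s * PI ->
  (forall t, 0 < t < T -> 0 < s * (th t - al) < PI) ->
  (forall t, 0 <= t <= T -> 0 <= s * (th t - al) <= PI) ->
  (forall t, 0 <= t <= T -> Rabs (rh t) <= d1 / 2) ->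
  arc (PX m Z) al (al + s * PI) r0 r1 -> r1 = rh T.
Proof.
  intros HT Hsol Hth0 Hrh0 HthT Int Clo RB [T' [th2 [rh2 [HT' [S2 [E1 [E2 [E3 [E4 Hint2]]]]]]]]].
  destruct (sign_square s Hs) as [Hss _]. pose proof PI_RGT_0.
  assert (Hend : s * (al + s * PI - al) = PI) by (replace (s * (al + s * PI - al)) with (s * s * PI) by ring; rewrite Hss; ring).
  assert (Int2 : forall t, 0 < t < T' -> 0 < s * (th2 t - al) < PI)
    by (intros t Ht; apply sector_interval_strict, Hint2; auto).
  assert (Clo2 : forall t, 0 <= t <= T' -> 0 <= s * (th2 t - al) <= PI).
  { intros t Ht. destruct (Req_dec t 0) as [->|]; [rewrite E1; lra|].
    destruct (Req_dec t T') as [->|]; [rewrite E3; lra|]. pose proof (Int2 t ltac:(lra)). lra. }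
  set (Tm := Rmin T T').
  assert (HTm : 0 <= Tm <= T /\ Tm <= T') by (unfold Tm, Rmin; destruct Rle_dec; lra).
  assert (UPTO : forall t, 0 <= t <= Tm -> (forall u, 0 <= u <= t -> Rabs (rh2 u) <= d1) ->
            forall u, 0 <= u <= t -> th2 u = th u /\ rh2 u = rh u).
  { intros t Ht Hb.
    apply (solution_unique ht_field1 ht_field2 t th2 rh2 th rh ht_field1_tame ht_field2_tame ltac:(lra)).
    - apply ht_clamped_solution; [intros v Hv; apply S2; lra | intros; apply Clo2; lra | auto].
    - apply ht_clamped_solution; [intros v Hv; apply Hsol; lra | intros; apply Clo; lra |].
      intros u Hu. specialize (RB u ltac:(lra)). lra.
    - congruence.
    - congruence. }
  assert (SMALL : forall t, 0 <= t <= Tm -> Rabs (rh2 t) <= d1 / 2).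
  { apply (continuous_bootstrap rh2 Tm (d1 / 2)); try lra.
    - intros t Ht. eapply derivable_lim_continuous. apply (S2 t). lra.
    - rewrite E2, <- Hrh0. apply RB. lra.
    - intros t Ht Hb. replace (2 * (d1 / 2)) with d1 in Hb by field.
      destruct (UPTO t Ht Hb t ltac:(lra)) as [_ ->]. apply RB. lra. }
  assert (EQ : forall u, 0 <= u <= Tm -> th2 u = th u /\ rh2 u = rh u).
  { apply (UPTO Tm); try lra. intros u Hu. specialize (SMALL u Hu). lra. }
  destruct (Rtotal_order T T') as [Hlt|[Heq|Hgt]].
  - exfalso. assert (Tm = T) by (unfold Tm; apply Rmin_left; lra).
    destruct (EQ T ltac:(lra)) as [A _]. specialize (Int2 T ltac:(lra)). rewrite A, HthT in Int2. lra.
  - subst T'. assert (Tm = T) by (unfold Tm; apply Rmin_left; lra).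
    destruct (EQ T ltac:(lra)) as [_ B]. rewrite <- E4, B. reflexivity.
  - exfalso. assert (Tm = T') by (unfold Tm; apply Rmin_right; lra).
    destruct (EQ T' ltac:(lra)) as [A _]. specialize (Int T' ltac:(lra)). rewrite <- A, E3 in Int. lra.
Qed.

End HalfTurn.

Lemma half_turn (m : nat) (Z : pvf) (al s c : R) (Phi g : R -> R) :
  (s = 1 \/ s = -1) -> 0 < c ->
  (forall th, 0 <= s * (th - al) <= PI -> 2 * c <= s * Afun Z m th) ->
  (forall x, derivable_pt_lim Phi x (g x)) ->
  (forall th, 0 <= s * (th - al) <= PI -> g th = Rfun Z m th / Afun Z m th) ->
  exists del E C, 0 < del /\ 0 < E /\ 0 <= C /\ forall r0, 0 <= r0 < del -> exists r1,
    arc (PX m Z) al (al + s * PI) r0 r1 /\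
    (forall r1', arc (PX m Z) al (al + s * PI) r0 r1' -> r1' = r1) /\
    0 <= r1 <= E * r0 /\
    (0 < r0 -> 0 < r1 /\ Rabs (ln r1 - ln r0 + (Phi (al + s * PI) - Phi al)) <= C * r0).
Proof.
  intros Hs Hc HA HPhi Hg. destruct (sign_square s Hs) as [Hss _]. pose proof PI_RGT_0.
  destruct (half_turn_constants m Z al s c Hs Hc HA) as [d1 [LQ [K [Hd1 [HLQ [HK [Hth [Hcf [Hrad Hdef]]]]]]]]].
  set (E := ht_growth c K). assert (HE := ht_growth_ge1 c Hc K HK). fold E in HE.
  exists (d1 / (2 * E)), E, (LQ * E * PI / (2 * c ^ 2)).
  split; [apply Rdiv_lt_0_compat; lra|]. split; [lra|].
  split; [apply Rlt_le, Rdiv_lt_0_compat; [apply Rmult_lt_0_compat; [apply Rmult_lt_0_compat|]; lra | pose proof (pow_lt c 2 Hc); lra]|].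
  intros r0 Hr0.
  assert (Hr0E : r0 * E < d1 / 2).
  { destruct Hr0 as [_ Hr0]. apply (Rmult_lt_compat_r E) in Hr0; [|lra].
    replace (d1 / (2 * E) * E) with (d1 / 2) in Hr0 by (field; lra). exact Hr0. }
  destruct (ht_orbit m Z al s c Hs Hc d1 K Hd1 HK Hth Hcf Hrad r0 ltac:(lra) Hr0E)
    as [T [th [rh [HT [Hsol [Hth0 [Hrh0 [HthT [Int [Clo [RB POS]]]]]]]]]]].
  fold E in RB.
  assert (RB2 : forall t, 0 <= t <= T -> Rabs (rh t) <= d1 / 2) by (intros t Ht; specialize (RB t Ht); lra).
  exists (rh T). split; [|split; [|split]].
  - exists T, th, rh. do 6 (split; [auto|]). intros t Ht. apply sector_interval_strict; auto.
  - intros r1' Harc. apply (ht_arc_unique m Z al s Hs d1 Hd1 r0 r1' T th rh); auto.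
  - destruct (Rle_lt_or_eq_dec 0 r0 (proj1 Hr0)) as [Hr|Hr].
    + pose proof (POS Hr T ltac:(lra)). specialize (RB T ltac:(lra)). rewrite Rabs_right in RB by lra. lra.
    + specialize (RB T ltac:(lra)). rewrite <- Hr, Rmult_0_l in RB. rewrite <- Hr, Rmult_0_r.
      pose proof (Rabs_pos (rh T)). assert (Hz : Rabs (rh T) = 0) by lra.
      apply Rabs_eq_0 in Hz. rewrite Hz. lra.
  - intros Hr. split; [apply POS; lra|].
    assert (L := ht_log_estimate m Z al s c Hs Hc HA d1 LQ Hd1 HLQ Hth Hdef Phi g T (r0 * E) th rh HPhi Hg
                   ltac:(lra) ltac:(lra) Hsol Clo).
    rewrite Hrh0, HthT, Hth0 in L.
    replace (s * (al + s * PI) - s * al) with PI in L by (replace (s * (al + s * PI) - s * al) with (s * s * PI) by ring; rewrite Hss; ring).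
    replace (LQ * E * PI / (2 * c ^ 2) * r0) with (LQ * (r0 * E) / (2 * c ^ 2) * PI) by (field; lra).
    apply L. intros t Ht. split; [apply POS; auto|]. specialize (RB t Ht). rewrite Rabs_right in RB; [lra|].
    left; apply POS; auto.
Qed.

(** * First return maps with a logarithmic estimate *)

Definition return_map_of (RR : R -> R -> Prop) (delta : R) (Pi : R -> R) : Prop :=
  0 < delta /\ (forall r0, 0 <= r0 < delta -> RR r0 (Pi r0)) /\
  (forall r0 r1, 0 <= r0 < delta -> RR r0 r1 -> r1 = Pi r0).

Definition attracting (RR : R -> R -> Prop) : Prop := exists delta, delta > 0 /\ forall r0, 0 < r0 < delta ->
  exists u : nat -> R, u 0%nat = r0 /\ (forall n, RR (u n) (u (S n))) /\ Un_cv u 0.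

Definition repelling (RR : R -> R -> Prop) : Prop := exists delta, delta > 0 /\ forall r0, 0 < r0 < delta ->
  exists u : nat -> R, u 0%nat = r0 /\ (forall n, RR (u (S n)) (u n)) /\ Un_cv u 0.

Lemma pow_le_one (q : R) (n : nat) : 0 <= q <= 1 -> q ^ n <= 1.
Proof. intros H. rewrite <- (pow1 n). apply pow_incr. lra. Qed.

Lemma exp_ln_ratio (a b : R) : 0 < a -> 0 < b -> exp (ln a - ln b) = a / b.
Proof. intros. unfold Rminus. rewrite exp_plus, <- ln_Rinv, !exp_ln; auto. apply Rinv_0_lt_compat; auto. Qed.

Lemma le_exp_mult_of_ln (a b k : R) : 0 < a -> 0 < b -> ln a - ln b <= k -> a <= exp k * b.
Proof.
  intros Ha Hb H. apply exp_le_compat in H. rewrite exp_ln_ratio in H by auto.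
  apply (Rmult_le_compat_r b) in H; [|lra]. replace (a / b * b) with a in H by (field; lra). lra.
Qed.

Lemma geometric_cv (u : nat -> R) (q r0 : R) : 0 < q < 1 -> 0 < r0 ->
  (forall n, 0 < u n <= q ^ n * r0) -> Un_cv u 0.
Proof.
  intros Hq Hr0 Inv eps Heps.
  destruct (pow_lt_1_zero q ltac:(rewrite Rabs_right; lra) (eps / r0) ltac:(apply Rdiv_lt_0_compat; lra)) as [N HN].
  exists N. intros n Hn. specialize (HN n Hn). unfold R_dist. rewrite Rminus_0_r. destruct (Inv n).
  rewrite Rabs_right by lra. rewrite Rabs_right in HN by (apply Rle_ge, pow_le; lra).
  apply (Rmult_lt_compat_r r0) in HN; [|lra]. replace (eps / r0 * r0) with eps in HN by (field; lra). lra.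
Qed.

Lemma attracting_of_contraction (RR : R -> R -> Prop) (step : R -> R) (d q : R) : 0 < d -> 0 < q < 1 ->
  (forall r, 0 < r < d -> 0 < step r <= q * r /\ RR r (step r)) -> attracting RR.
Proof.
  intros Hd Hq Hstep. exists d. split; [lra|]. intros r0 Hr0.
  set (u := fun n => Nat.iter n step r0).
  assert (Inv : forall n, 0 < u n <= q ^ n * r0).
  { induction n as [|n IH]; [unfold u; simpl; lra|].
    change (u (S n)) with (step (u n)). assert (q ^ n <= 1) by (apply pow_le_one; lra).
    assert (u n < d) by nra. destruct (Hstep (u n) ltac:(lra)) as [[A B] _]. simpl. nra. }
  exists u. split; [reflexivity|]. split; [|apply (geometric_cv u q r0); auto; lra].
  intros n. change (u (S n)) with (step (u n)). destruct (Inv n).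
  assert (q ^ n <= 1) by (apply pow_le_one; lra). apply Hstep. nra.
Qed.

Lemma repelling_of_backward_contraction (RR : R -> R -> Prop) (d q : R) : 0 < d -> 0 < q < 1 ->
  (forall r, 0 < r < d -> exists p, 0 < p <= q * r /\ RR p r) -> repelling RR.
Proof.
  intros Hd Hq Hback.
  assert (Step : forall r, exists p, 0 < r < d -> 0 < p <= q * r /\ RR p r).
  { intros r. destruct (classic (0 < r < d)) as [Hr|Hr]; [|exists 0; tauto].
    destruct (Hback r Hr) as [p Hp]. exists p. auto. }
  set (back := fun r => proj1_sig (constructive_indefinite_description _ (Step r))).
  assert (Hbk : forall r, 0 < r < d -> 0 < back r <= q * r /\ RR (back r) r).
  { intros r Hr. unfold back. destruct (constructive_indefinite_description _ (Step r)) as [p Hp]. simpl. auto. }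
  exists d. split; [lra|]. intros r0 Hr0.
  set (u := fun n => Nat.iter n back r0).
  assert (Inv : forall n, 0 < u n <= q ^ n * r0).
  { induction n as [|n IH]; [unfold u; simpl; lra|].
    change (u (S n)) with (back (u n)). assert (q ^ n <= 1) by (apply pow_le_one; lra).
    assert (u n < d) by nra. destruct (Hbk (u n) ltac:(lra)) as [A _]. simpl. nra. }
  exists u. split; [reflexivity|]. split; [|apply (geometric_cv u q r0); auto; lra].
  intros n. change (u (S n)) with (back (u n)). destruct (Inv n).
  assert (q ^ n <= 1) by (apply pow_le_one; lra). apply Hbk. nra.
Qed.

Lemma rderiv_unique (f g : R -> R) (l1 l2 eta : R) : eta > 0 -> (forall h, 0 <= h < eta -> f h = g h) ->
  rderiv_at f 0 l1 -> rderiv_at g 0 l2 -> l1 = l2.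
Proof.
  intros He Hfg H1 H2. apply NNPP; intros Hne.
  set (e := Rabs (l1 - l2) / 2).
  assert (He' : e > 0) by (unfold e; apply Rdiv_lt_0_compat; [apply Rabs_pos_lt; lra | lra]).
  destruct (H1 e He') as [e1 [He1 A]]. destruct (H2 e He') as [e2 [He2 B]].
  set (h := Rmin eta (Rmin e1 e2) / 2).
  assert (0 < Rmin e1 e2) by (apply Rmin_pos; lra).
  assert (0 < Rmin eta (Rmin e1 e2)) by (apply Rmin_pos; lra).
  pose proof (Rmin_l eta (Rmin e1 e2)); pose proof (Rmin_r eta (Rmin e1 e2)).
  pose proof (Rmin_l e1 e2); pose proof (Rmin_r e1 e2).
  specialize (A h ltac:(unfold h; lra)). specialize (B h ltac:(unfold h; lra)).
  rewrite Rplus_0_l in A, B. rewrite (Hfg h), (Hfg 0) in A by (unfold h; lra).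
  pose proof (Rabs_triang ((g h - g 0) / h - l2) (- ((g h - g 0) / h - l1))) as HT.
  rewrite Rabs_Ropp in HT. replace ((g h - g 0) / h - l2 + - ((g h - g 0) / h - l1)) with (l1 - l2) in HT by ring.
  unfold e in *. lra.
Qed.

Section LogEstimate.

Variables (RR : R -> R -> Prop) (delta : R) (Pi : R -> R) (C lam : R).
Hypotheses (HPi : return_map_of RR delta Pi) (Pi0 : Pi 0 = 0) (HC : 0 <= C).
Hypothesis Hlog : forall r, 0 < r < delta -> 0 < Pi r /\ Rabs (ln (Pi r) - ln r - lam) <= C * r.

Lemma return_map_rderiv : rderiv_at Pi 0 (exp lam).
Proof.
  destruct HPi as [Hd _]. intros eps Heps.
  destruct (continuity_pt_eps exp lam (derivable_continuous_pt _ _ (derivable_pt_exp lam)) eps Heps) as [de [Hde Hde']].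
  exists (Rmin delta (de / (C + 1))). split; [apply Rmin_pos; [lra | apply Rdiv_lt_0_compat; lra]|].
  intros h Hh. pose proof (Rmin_l delta (de / (C + 1))); pose proof (Rmin_r delta (de / (C + 1))).
  rewrite Rplus_0_l, Pi0, Rminus_0_r. destruct (Hlog h ltac:(lra)) as [Hp Hb].
  rewrite <- exp_ln_ratio by lra. apply Hde'.
  apply Rle_lt_trans with (C * h); auto. apply Rle_lt_trans with ((C + 1) * h); [nra|].
  assert (h < de / (C + 1)) by lra.
  apply (Rmult_lt_compat_l (C + 1)) in H1; [|lra]. replace ((C + 1) * (de / (C + 1))) with de in H1 by (field; lra). lra.
Qed.

(** for [lam < 0], [Pi r <= exp (lam / 2) r] near 0, so [S^1] attracts *)
Lemma return_map_attracting : lam < 0 -> attracting RR.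
Proof.
  intros Hlam. destruct HPi as [Hd [HRR _]].
  set (d' := Rmin delta (- lam / (2 * (C + 1)))).
  assert (Hd' : 0 < d') by (unfold d'; apply Rmin_pos; [lra | apply Rdiv_lt_0_compat; lra]).
  apply (attracting_of_contraction RR Pi d' (exp (lam / 2)) Hd').
  { split; [apply exp_pos | rewrite <- exp_0; apply exp_increasing; lra]. }
  intros r Hr. pose proof (Rmin_l delta (- lam / (2 * (C + 1)))); pose proof (Rmin_r delta (- lam / (2 * (C + 1)))).
  destruct (Hlog r ltac:(unfold d' in *; lra)) as [Hp Hb].
  split; [split; auto | apply HRR; unfold d' in *; lra].
  assert (C * r <= - lam / 2).
  { assert (r <= - lam / (2 * (C + 1))) by (unfold d' in *; lra).
    apply (Rmult_le_compat_l (2 * (C + 1))) in H1; [|lra].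
    replace (2 * (C + 1) * (- lam / (2 * (C + 1)))) with (- lam) in H1 by (field; lra). nra. }
  apply le_exp_mult_of_ln; try lra. pose proof (Rle_abs (ln (Pi r) - ln r - lam)). lra.
Qed.

Hypothesis Hback : exists db E', 0 < db /\ 0 < E' /\
  forall r, 0 < r < db -> exists p, 0 < p <= E' * r /\ RR p r.

(** for [lam > 0], the preimages satisfy [p <= exp (- lam / 2) r], so [S^1] repels *)
Lemma return_map_repelling : lam > 0 -> repelling RR.
Proof.
  intros Hlam. destruct HPi as [Hd [HRR HU]]. destruct Hback as [db [E' [Hdb [HE' HB]]]].
  set (d' := Rmin db (Rmin (delta / (E' + 1)) (lam / (2 * (C + 1) * (E' + 1))))).
  assert (Hd' : 0 < d') by (unfold d'; repeat apply Rmin_pos; try lra; apply Rdiv_lt_0_compat; nra).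
  assert (Hd'1 : d' <= db) by apply Rmin_l.
  assert (Hd'2 : d' <= delta / (E' + 1)) by (eapply Rle_trans; [apply Rmin_r | apply Rmin_l]).
  assert (Hd'3 : d' <= lam / (2 * (C + 1) * (E' + 1))) by (eapply Rle_trans; [apply Rmin_r | apply Rmin_r]).
  apply (repelling_of_backward_contraction RR d' (exp (- lam / 2)) Hd').
  { split; [apply exp_pos | rewrite <- exp_0; apply exp_increasing; lra]. }
  intros r Hr. destruct (HB r ltac:(lra)) as [p [Hp HRp]]. exists p. split; [|exact HRp].
  assert (HpE : p <= (E' + 1) * d') by nra.
  assert (p < delta).
  { apply (Rmult_le_compat_l (E' + 1)) in Hd'2; [|lra].
    replace ((E' + 1) * (delta / (E' + 1))) with delta in Hd'2 by (field; lra). nra. }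
  assert (Er : r = Pi p) by (apply HU; auto; lra).
  destruct (Hlog p ltac:(lra)) as [_ Hb]. rewrite <- Er in Hb.
  assert (C * p <= lam / 2).
  { apply (Rmult_le_compat_l (E' + 1)) in Hd'3; [|lra].
    replace ((E' + 1) * (lam / (2 * (C + 1) * (E' + 1)))) with (lam / (2 * (C + 1))) in Hd'3 by (field; lra).
    assert (p <= lam / (2 * (C + 1))) by lra.
    apply (Rmult_le_compat_l (2 * (C + 1))) in H0; [|lra].
    replace (2 * (C + 1) * (lam / (2 * (C + 1)))) with lam in H0 by (field; lra). nra. }
  split; [lra|]. apply le_exp_mult_of_ln; try lra.
  pose proof (Rle_abs (- (ln r - ln p - lam))). rewrite Rabs_Ropp in H1. lra.
Qed.

Lemma return_map_elementary_iff :
  (exists d' Pi' d, return_map_of RR d' Pi' /\ rderiv_at Pi' 0 d /\ d <> 1) <-> lam <> 0.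
Proof.
  destruct HPi as [Hd [HRR HU]]. split.
  - intros [d' [Pi' [d [[Hd0 [HR' HU']] [HD Hne]]]]] Hl.
    assert (d = exp lam).
    { apply (rderiv_unique Pi' Pi d (exp lam) (Rmin delta d')); auto; [apply Rmin_pos; lra| |apply return_map_rderiv].
      intros h Hh. pose proof (Rmin_l delta d'); pose proof (Rmin_r delta d').
      symmetry. apply HU'; [lra | apply HRR; lra]. }
    rewrite Hl, exp_0 in H. auto.
  - intros Hl. exists delta, Pi, (exp lam). split; [split; auto|]. split; [apply return_map_rderiv|].
    intros He. apply Hl. apply exp_inv. rewrite exp_0. auto.
Qed.

End LogEstimate.

Definition log_return_estimate (RR : R -> R -> Prop) (lam : R) : Prop :=
  exists delta Pi C, return_map_of RR delta Pi /\ Pi 0 = 0 /\ 0 <= C /\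
    (forall r, 0 < r < delta -> 0 < Pi r /\ Rabs (ln (Pi r) - ln r - lam) <= C * r) /\
    (exists db E', 0 < db /\ 0 < E' /\ forall r, 0 < r < db -> exists p, 0 < p <= E' * r /\ RR p r).

Lemma log_return_consequences (RR : R -> R -> Prop) (lam : R) : log_return_estimate RR lam ->
  RR 0 0 /\ (exists delta Pi, return_map_of RR delta Pi /\ rderiv_at Pi 0 (exp lam)) /\
  (lam < 0 -> attracting RR) /\ (lam > 0 -> repelling RR) /\
  ((exists d' Pi' d, return_map_of RR d' Pi' /\ rderiv_at Pi' 0 d /\ d <> 1) <-> lam <> 0).
Proof.
  intros [delta [Pi [C [HPi [Pi0 [HC [Hlog Hback]]]]]]].
  split; [destruct HPi as [Hd [HRR _]]; rewrite <- Pi0 at 2; apply HRR; lra|].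
  split; [exists delta, Pi; split; [auto | apply (return_map_rderiv RR delta Pi C lam HPi Pi0 HC Hlog)]|].
  split; [apply (return_map_attracting RR delta Pi C lam HPi HC Hlog)|].
  split; [apply (return_map_repelling RR delta Pi C lam HPi HC Hlog Hback)|].
  apply (return_map_elementary_iff RR delta Pi C lam HPi Pi0 HC Hlog).
Qed.

(** * Time reversal

    Backward orbits of [P(X)] are forward orbits of [P(-X)]; this gives the preimages needed
    for repulsion from the half-turn lemma applied to [-X]. *)

Lemma sum_f_R0_opp (f : nat -> R) (n : nat) : sum_f_R0 (fun i => - f i) n = - sum_f_R0 f n.
Proof. induction n; simpl; [ring | rewrite IHn; ring]. Qed.

Definition neg_field (Z : pvf) : pvf := mkPvf (fun i j => - cP Z i j) (fun i j => - cQ Z i j).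

Lemma hom_opp (c : nat -> nat -> R) (k : nat) (x y : R) : hom (fun i j => - c i j) k x y = - hom c k x y.
Proof. unfold hom. rewrite <- sum_f_R0_opp. apply sum_eq. intros; ring. Qed.

Lemma Afun_neg_field (Z : pvf) (j : nat) (th : R) : Afun (neg_field Z) j th = - Afun Z j th.
Proof. unfold Afun, neg_field; simpl. rewrite !hom_opp. ring. Qed.

Lemma Rfun_neg_field (Z : pvf) (j : nat) (th : R) : Rfun (neg_field Z) j th = - Rfun Z j th.
Proof. unfold Rfun, neg_field; simpl. rewrite !hom_opp. ring. Qed.

Lemma PX_neg_field (m : nat) (Z : pvf) (th rho : R) :
  PX m (neg_field Z) th rho = (- fst (PX m Z th rho), - snd (PX m Z th rho)).
Proof.
  rewrite !PX_decomposition. simpl. unfold theta_poly, rho_poly.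
  rewrite (sum_eq (fun j => rho ^ (m - j) * Afun (neg_field Z) j th) (fun j => - (rho ^ (m - j) * Afun Z j th)))
    by (intros; rewrite Afun_neg_field; ring).
  rewrite (sum_eq (fun j => rho ^ (m - j) * Rfun (neg_field Z) j th) (fun j => - (rho ^ (m - j) * Rfun Z j th)))
    by (intros; rewrite Rfun_neg_field; ring).
  rewrite !sum_f_R0_opp. f_equal; ring.
Qed.

Lemma arc_reverse (m : nat) (Z : pvf) (a b r0 r1 : R) :
  arc (PX m (neg_field Z)) b a r1 r0 -> arc (PX m Z) a b r0 r1.
Proof.
  intros [T [th [rh [HT [S [E1 [E2 [E3 [E4 Hint]]]]]]]]].
  exists T, (fun t => th (T - t)), (fun t => rh (T - t)).
  assert (Hm : forall t, derivable_pt_lim (fun t => T - t) t (-1)).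
  { intros t. replace (-1) with (0 - 1) by ring.
    apply derivable_pt_lim_minus; [apply derivable_pt_lim_const | apply derivable_pt_lim_id]. }
  split; [auto|]. split.
  - intros t Ht. destruct (S (T - t) ltac:(lra)) as [A B]. rewrite PX_neg_field in A, B. simpl in A, B.
    split.
    + replace (fst (PX m Z (th (T - t)) (rh (T - t)))) with (- fst (PX m Z (th (T - t)) (rh (T - t))) * -1) by ring.
      apply (derivable_pt_lim_comp (fun t => T - t) th t _ _ (Hm t) A).
    + replace (snd (PX m Z (th (T - t)) (rh (T - t)))) with (- snd (PX m Z (th (T - t)) (rh (T - t))) * -1) by ring.
      apply (derivable_pt_lim_comp (fun t => T - t) rh t _ _ (Hm t) B).
  - simpl. rewrite Rminus_0_r, Rminus_diag. do 4 (split; [auto|]).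
    intros t Ht. rewrite Rmin_comm, Rmax_comm. apply Hint. lra.
Qed.

Lemma sector_reverse (s a1 th : R) : (s = 1 \/ s = -1) ->
  (0 <= - s * (th - (a1 + s * PI)) <= PI <-> 0 <= s * (th - a1) <= PI).
Proof.
  intros Hs. destruct (sign_square s Hs) as [Hss _].
  replace (- s * (th - (a1 + s * PI))) with (s * s * PI - s * (th - a1)) by ring. rewrite Hss. split; intros; lra.
Qed.

Lemma half_turn_reverse_hyps (m : nat) (Z : pvf) (a s c : R) (g : R -> R) : (s = 1 \/ s = -1) ->
  (forall th, 0 <= s * (th - a) <= PI -> 2 * c <= s * Afun Z m th) ->
  (forall th, 0 <= s * (th - a) <= PI -> g th = Rfun Z m th / Afun Z m th) ->
  (forall th, 0 <= - s * (th - (a + s * PI)) <= PI -> 2 * c <= - s * Afun (neg_field Z) m th) /\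
  (forall th, 0 <= - s * (th - (a + s * PI)) <= PI -> g th = Rfun (neg_field Z) m th / Afun (neg_field Z) m th).
Proof.
  intros Hs HA Hg. split; intros th Hth; apply (sector_reverse s a th Hs) in Hth.
  - rewrite Afun_neg_field. replace (- s * - Afun Z m th) with (s * Afun Z m th) by ring. auto.
  - rewrite Afun_neg_field, Rfun_neg_field, Hg by auto. unfold Rdiv.
    destruct (Req_dec (Afun Z m th) 0) as [Hz|Hz].
    + rewrite Hz, Ropp_0, Rinv_0. ring.
    + rewrite Rinv_opp by auto. ring.
Qed.

(** * Two consecutive half turns *)

Definition two_turn_rel (m : nat) (Z1 Z2 : pvf) (a0 a1 a2 : R) (r0 r1 : R) : Prop :=
  exists rmid, arc (PX m Z1) a0 a1 r0 rmid /\ arc (PX m Z2) a1 a2 rmid r1.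

Section TwoTurns.

Variables (m : nat) (Z1 Z2 : pvf) (a0 a1 a2 s c1 c2 : R) (Phi1 g1 Phi2 g2 : R -> R).
Hypotheses (Hs : s = 1 \/ s = -1) (Ha1 : a1 = a0 + s * PI) (Ha2 : a2 = a1 + s * PI).
Hypotheses (Hc1 : 0 < c1) (Hc2 : 0 < c2).
Hypothesis HA1 : forall th, 0 <= s * (th - a0) <= PI -> 2 * c1 <= s * Afun Z1 m th.
Hypothesis HA2 : forall th, 0 <= s * (th - a1) <= PI -> 2 * c2 <= s * Afun Z2 m th.
Hypotheses (HP1 : forall x, derivable_pt_lim Phi1 x (g1 x)) (HP2 : forall x, derivable_pt_lim Phi2 x (g2 x)).
Hypothesis Hg1 : forall th, 0 <= s * (th - a0) <= PI -> g1 th = Rfun Z1 m th / Afun Z1 m th.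
Hypothesis Hg2 : forall th, 0 <= s * (th - a1) <= PI -> g2 th = Rfun Z2 m th / Afun Z2 m th.

Definition two_turn_exponent : R := - ((Phi1 a1 - Phi1 a0) + (Phi2 a2 - Phi2 a1)).

Lemma two_turn_return_map : exists delta Pi C,
  return_map_of (two_turn_rel m Z1 Z2 a0 a1 a2) delta Pi /\ Pi 0 = 0 /\ 0 <= C /\
  (forall r, 0 < r < delta -> 0 < Pi r /\ Rabs (ln (Pi r) - ln r - two_turn_exponent) <= C * r).
Proof.
  destruct (half_turn m Z1 a0 s c1 Phi1 g1 Hs Hc1 HA1 HP1 Hg1) as [d1 [F1 [C1 [Hd1 [HF1 [HC1 L1]]]]]].
  destruct (half_turn m Z2 a1 s c2 Phi2 g2 Hs Hc2 HA2 HP2 Hg2) as [d2 [F2 [C2 [Hd2 [HF2 [HC2 L2]]]]]].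
  rewrite <- Ha1 in L1. rewrite <- Ha2 in L2.
  set (delta := Rmin d1 (d2 / (F1 + 1))).
  assert (Hdel : 0 < delta) by (unfold delta; apply Rmin_pos; [lra | apply Rdiv_lt_0_compat; lra]).
  assert (Hdel1 : delta <= d1) by apply Rmin_l.
  assert (Mid : forall r0, 0 <= r0 < delta -> forall rm, 0 <= rm <= F1 * r0 -> 0 <= rm < d2).
  { intros r0 Hr0 rm Hrm. assert (Hdel2 : delta <= d2 / (F1 + 1)) by apply Rmin_r.
    apply (Rmult_le_compat_l (F1 + 1)) in Hdel2; [|lra].
    replace ((F1 + 1) * (d2 / (F1 + 1))) with d2 in Hdel2 by (field; lra). nra. }
  set (P := fun r0 r1 => 0 <= r0 < delta -> two_turn_rel m Z1 Z2 a0 a1 a2 r0 r1 /\ 0 <= r1 /\ (r0 = 0 -> r1 = 0) /\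
            (0 < r0 -> 0 < r1 /\ Rabs (ln r1 - ln r0 - two_turn_exponent) <= (C1 + C2 * F1) * r0)).
  assert (Ex : forall r0, exists r1, P r0 r1).
  { intros r0. destruct (classic (0 <= r0 < delta)) as [Hr|Hr]; [|exists 0; intros H; tauto].
    destruct (L1 r0 ltac:(lra)) as [rm [A1 [U1 [B1 P1]]]].
    destruct (L2 rm (Mid r0 Hr rm B1)) as [r1 [A2 [U2 [B2 P2]]]].
    exists r1. intros _. split; [exists rm; auto|]. split; [lra|]. split.
    - intros ->. assert (rm = 0) by nra. subst rm. nra.
    - intros Hpos. destruct (P1 Hpos) as [Hrm Hl1]. destruct (P2 Hrm) as [Hr1 Hl2]. split; auto.
      unfold two_turn_exponent.
      replace (ln r1 - ln r0 - - (Phi1 a1 - Phi1 a0 + (Phi2 a2 - Phi2 a1))) with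
        ((ln rm - ln r0 + (Phi1 a1 - Phi1 a0)) + (ln r1 - ln rm + (Phi2 a2 - Phi2 a1))) by ring.
      eapply Rle_trans; [apply Rabs_triang|]. assert (C2 * rm <= C2 * (F1 * r0)) by (apply Rmult_le_compat_l; lra). nra. }
  set (Pi := fun r0 => proj1_sig (constructive_indefinite_description _ (Ex r0))).
  assert (HPi : forall r0, P r0 (Pi r0)) by (intros; unfold Pi; destruct (constructive_indefinite_description _ (Ex r0)); auto).
  exists delta, Pi, (C1 + C2 * F1). split; [split; [lra | split]|].
  - intros r0 Hr0. apply HPi; auto.
  - (* uniqueness: both half turns have unique end points *)
    intros r0 r1 Hr0 [rm [A1 A2]]. destruct (HPi r0 Hr0) as [[rm' [A1' A2']] _].
    destruct (L1 r0 ltac:(lra)) as [rm0 [_ [U1 [B1 _]]]].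
    assert (rm = rm0) by (apply U1; auto). assert (rm' = rm0) by (apply U1; auto). subst rm rm'.
    destruct (L2 rm0 (Mid r0 Hr0 rm0 B1)) as [r10 [_ [U2 _]]].
    rewrite (U2 r1 A2), (U2 (Pi r0) A2'). reflexivity.
  - split; [destruct (HPi 0 ltac:(lra)) as [_ [_ [Z _]]]; auto|].
    split; [assert (0 <= C2 * F1) by (apply Rmult_le_pos; lra); lra|].
    intros r Hr. destruct (HPi r ltac:(lra)) as [_ [_ [_ Z]]]. apply Z; lra.
Qed.

(** backward half turns of [-Z2] then [-Z1] give preimages of size [O(r)] *)
Lemma two_turn_preimages : exists db E', 0 < db /\ 0 < E' /\
  forall r, 0 < r < db -> exists p, 0 < p <= E' * r /\ two_turn_rel m Z1 Z2 a0 a1 a2 p r.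
Proof.
  assert (Hs' : - s = 1 \/ - s = -1) by (destruct Hs; [right | left]; lra).
  destruct (half_turn_reverse_hyps m Z1 a0 s c1 g1 Hs HA1 Hg1) as [HAn1 Hgn1].
  destruct (half_turn_reverse_hyps m Z2 a1 s c2 g2 Hs HA2 Hg2) as [HAn2 Hgn2].
  rewrite <- Ha1 in HAn1, Hgn1. rewrite <- Ha2 in HAn2, Hgn2.
  destruct (half_turn m (neg_field Z2) a2 (- s) c2 Phi2 g2 Hs' Hc2 HAn2 HP2 Hgn2) as [e2 [G2 [? [He2 [HG2 [_ M2]]]]]].
  destruct (half_turn m (neg_field Z1) a1 (- s) c1 Phi1 g1 Hs' Hc1 HAn1 HP1 Hgn1) as [e1 [G1 [? [He1 [HG1 [_ M1]]]]]].
  replace (a2 + - s * PI) with a1 in M2 by (rewrite Ha2; ring).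
  replace (a1 + - s * PI) with a0 in M1 by (rewrite Ha1; ring).
  set (db := Rmin e2 (e1 / (G2 + 1))).
  exists db, (G1 * G2). split; [unfold db; apply Rmin_pos; [lra | apply Rdiv_lt_0_compat; lra]|]. split; [nra|].
  intros r Hr. pose proof (Rmin_l e2 (e1 / (G2 + 1))); pose proof (Rmin_r e2 (e1 / (G2 + 1))).
  destruct (M2 r ltac:(unfold db in *; lra)) as [rm [A2 [_ [B2 P2]]]]. destruct (P2 ltac:(lra)) as [Hrm _].
  assert (rm < e1).
  { assert (r < e1 / (G2 + 1)) by (unfold db in *; lra).
    apply (Rmult_lt_compat_l (G2 + 1)) in H1; [|lra].
    replace ((G2 + 1) * (e1 / (G2 + 1))) with e1 in H1 by (field; lra). nra. }
  destruct (M1 rm ltac:(lra)) as [p [A1 [_ [B1 P1]]]]. destruct (P1 Hrm) as [Hp _].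
  exists p. split.
  - split; auto. assert (G1 * rm <= G1 * (G2 * r)) by (apply Rmult_le_compat_l; lra). nra.
  - exists rm. split; apply arc_reverse; auto.
Qed.

Lemma two_turn_log_estimate : log_return_estimate (two_turn_rel m Z1 Z2 a0 a1 a2) two_turn_exponent.
Proof.
  destruct two_turn_return_map as [delta [Pi [C [HPi [Pi0 [HC Hlog]]]]]].
  exists delta, Pi, C. repeat (split; [auto|]). apply two_turn_preimages.
Qed.

End TwoTurns.

(** * Odd degree: [A_m] and [R_m] are [pi]-periodic *)

Lemma hom_opp_args (c : nat -> nat -> R) (k : nat) (x y : R) : hom c k (- x) (- y) = (-1) ^ k * hom c k x y.
Proof.
  unfold hom. rewrite scal_sum. apply sum_eq. intros i Hi.
  replace (- x) with (-1 * x) by ring. replace (- y) with (-1 * y) by ring. rewrite !Rpow_mult_distr.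
  replace ((-1) ^ k) with ((-1) ^ i * (-1) ^ (k - i)) by (rewrite <- pow_add; f_equal; lia). ring.
Qed.

Lemma pow_minus_one_odd (m : nat) : Nat.Odd m -> (-1) ^ m = -1.
Proof. intros [k ->]. rewrite pow_add, pow_mult. replace ((-1) ^ 2) with 1 by ring. rewrite pow1. ring. Qed.

(** [theta |-> theta + pi] is [(x, y) |-> (-x, -y)], which multiplies [A_m], [R_m] by [(-1)^(m+1) = 1] *)
Lemma Afun_shift_PI (m : nat) (Z : pvf) (th : R) : Nat.Odd m -> Afun Z m (th + PI) = Afun Z m th.
Proof. intros Ho. unfold Afun. rewrite neg_cos, neg_sin, !hom_opp_args, pow_minus_one_odd by auto. ring. Qed.

Lemma Rfun_shift_PI (m : nat) (Z : pvf) (th : R) : Nat.Odd m -> Rfun Z m (th + PI) = Rfun Z m th.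
Proof. intros Ho. unfold Rfun. rewrite neg_cos, neg_sin, !hom_opp_args, pow_minus_one_odd by auto. ring. Qed.

Lemma Afun_shift_mPI (m : nat) (Z : pvf) (th : R) : Nat.Odd m -> Afun Z m (th - PI) = Afun Z m th.
Proof. intros Ho. rewrite <- (Afun_shift_PI m Z (th - PI) Ho). f_equal; ring. Qed.

Lemma Rfun_shift_mPI (m : nat) (Z : pvf) (th : R) : Nat.Odd m -> Rfun Z m (th - PI) = Rfun Z m th.
Proof. intros Ho. rewrite <- (Rfun_shift_PI m Z (th - PI) Ho). f_equal; ring. Qed.

Lemma Afun_shift_2PI (m : nat) (Z : pvf) (th : R) : Nat.Odd m -> Afun Z m (th + 2 * PI) = Afun Z m th.
Proof. intros Ho. replace (th + 2 * PI) with ((th + PI) + PI) by ring. rewrite !Afun_shift_PI; auto. Qed.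

Lemma Rfun_shift_2PI (m : nat) (Z : pvf) (th : R) : Nat.Odd m -> Rfun Z m (th + 2 * PI) = Rfun Z m th.
Proof. intros Ho. replace (th + 2 * PI) with ((th + PI) + PI) by ring. rewrite !Rfun_shift_PI; auto. Qed.

(** * [S^1] without singular points *)

Lemma no_singular_consequences (m : nat) (X Y : pvf) : no_singular_on_S1 m X Y ->
  (forall th, 0 <= sin th -> Afun X m th <> 0) /\ (forall th, sin th <= 0 -> Afun Y m th <> 0) /\
  0 < Afun X m 0 * Afun Y m 0.
Proof.
  intros Hns.
  assert (N1 : forall th, 0 <= sin th -> Afun X m th <> 0).
  { intros th Hs HA. apply (Hns th). left. split; [lra|]. rewrite PX_on_circle, HA. reflexivity. }
  assert (N2 : forall th, sin th <= 0 -> Afun Y m th <> 0).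
  { intros th Hs HA. apply (Hns th). right; left. split; [lra|]. rewrite PX_on_circle, HA. reflexivity. }
  split; [exact N1|]. split; [exact N2|].
  destruct (Rlt_or_le 0 (Afun X m 0 * Afun Y m 0)) as [|Hle]; auto. exfalso.
  assert (HX0 := N1 0 ltac:(rewrite sin_0; lra)). assert (HY0 := N2 0 ltac:(rewrite sin_0; lra)).
  assert (Hlt : Afun X m 0 * Afun Y m 0 < 0).
  { destruct Hle as [|Heq]; auto. apply Rmult_integral in Heq. destruct Heq; contradiction. }
  (* opposite signs at [theta = 0]: a pseudo-equilibrium of the sliding field *)
  apply (Hns 0). right; right. split; [apply sin_0|]. right; right.
  rewrite !Lf_on_circle, cos_0, !Rmult_1_r. split; auto.
  unfold sliding. rewrite !Lf_on_circle, cos_0, !PX_on_circle. simpl. f_equal; unfold Rdiv; ring.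
Qed.

(** [(1, 0, 0)] and [(-1, 0, 0)] are sewing points, since [A_m(pi) = A_m(0)] and [cos pi = - cos 0] *)
Lemma S1_sewing (m : nat) (X Y : pvf) : Nat.Odd m -> 0 < Afun X m 0 * Afun Y m 0 ->
  sewing m X Y 0 /\ sewing m X Y PI.
Proof.
  intros Ho H. unfold sewing. rewrite !Lf_on_circle, cos_0, cos_PI.
  pose proof (Afun_shift_PI m X 0 Ho) as AX. pose proof (Afun_shift_PI m Y 0 Ho) as AY.
  rewrite Rplus_0_l in AX, AY. rewrite AX, AY. split; nra.
Qed.

Lemma S1_sign_bounds (m : nat) (X Y : pvf) (sg : R) : Nat.Odd m -> (sg = 1 \/ sg = -1) ->
  0 < sg * Afun X m 0 -> 0 < sg * Afun Y m 0 ->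
  (forall th, 0 <= sin th -> Afun X m th <> 0) -> (forall th, sin th <= 0 -> Afun Y m th <> 0) ->
  exists cX cY, 0 < cX /\ 0 < cY /\ (forall th, 0 <= th <= PI -> 2 * cX <= sg * Afun X m th) /\
     (forall th, 0 <= th <= PI -> 2 * cY <= sg * Afun Y m th).
Proof.
  intros Ho Hs HX HY N1 N2. destruct (sign_square sg Hs) as [Hss _]. pose proof PI_RGT_0.
  assert (PX : forall th, 0 <= th <= PI -> 0 < sg * Afun X m th).
  { intros th Hth. assert (S := continuous_nonvanishing_sign (fun a => Afun X m a) 0 PI (Afun_continuous X m) ltac:(lra)
        ltac:(intros x Hx; apply N1; apply sin_ge_0; lra) th Hth). simpl in S.
    assert (0 < Afun X m 0 * Afun X m 0) by nra. nra. }
  assert (PY : forall th, 0 <= th <= PI -> 0 < sg * Afun Y m th).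
  { intros th Hth. rewrite <- (Afun_shift_mPI m Y th Ho).
    assert (NY : forall x, - PI <= x <= 0 -> Afun Y m x <> 0).
    { intros x Hx. apply N2. rewrite <- (Ropp_involutive x), sin_neg.
      pose proof (sin_ge_0 (- x) ltac:(lra) ltac:(lra)). lra. }
    assert (S1 := continuous_nonvanishing_sign (fun a => Afun Y m a) (- PI) 0 (Afun_continuous Y m) ltac:(lra) NY (th - PI) ltac:(lra)).
    assert (S2 := continuous_nonvanishing_sign (fun a => Afun Y m a) (- PI) 0 (Afun_continuous Y m) ltac:(lra) NY 0 ltac:(lra)).
    simpl in S1, S2.
    set (b := Afun Y m (- PI)) in *. set (a0 := Afun Y m 0) in *. set (a := Afun Y m (th - PI)) in *.
    assert (0 < (b * b) * (a0 * a)) by nra. assert (0 < b * b) by nra. assert (0 < a0 * a) by nra.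
    assert (0 < a0 * a0) by nra. nra. }
  destruct (continuous_pos_lower_bound (fun th => sg * Afun X m th) 0 PI ltac:(lra)) as [cX [HcX HX']];
    [intros; apply (continuity_pt_scal (fun a => Afun X m a)), Afun_continuous | exact PX |].
  destruct (continuous_pos_lower_bound (fun th => sg * Afun Y m th) 0 PI ltac:(lra)) as [cY [HcY HY']];
    [intros; apply (continuity_pt_scal (fun a => Afun Y m a)), Afun_continuous | exact PY |].
  exists cX, cY. auto.
Qed.

(** * A continuous primitive of [R_m / A_m]

    [reg_integrand] agrees with [R_m / A_m] wherever [sg A_m >= 2 c], and is continuous
    everywhere, so [t |-> int_0^t reg_integrand] is a global primitive. *)

Definition reg_integrand (m : nat) (Z : pvf) (sg c th : R) : R := Rfun Z m th * sg / Rmax (sg * Afun Z m th) c.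

Lemma Rmax_r_lipschitz (a b c : R) : Rabs (Rmax a c - Rmax b c) <= Rabs (a - b).
Proof.
  unfold Rmax; repeat destruct Rle_dec; apply Rabs_le;
  pose proof (Rle_abs (a - b)); pose proof (Rle_abs (- (a - b))); rewrite Rabs_Ropp in *; lra.
Qed.

Lemma reg_integrand_continuous (m : nat) (Z : pvf) (sg c x : R) : 0 < c -> continuity_pt (reg_integrand m Z sg c) x.
Proof.
  intros Hc. unfold reg_integrand, Rdiv.
  apply (continuity_pt_mult (fun th => Rfun Z m th * sg) (fun th => / Rmax (sg * Afun Z m th) c)).
  - apply (continuity_pt_mult (fun th => Rfun Z m th) (fun _ => sg));
      [apply Rfun_continuous | apply continuity_pt_const; intros ? ?; reflexivity].
  - apply (continuity_pt_inv (fun th => Rmax (sg * Afun Z m th) c)); [|pose proof (Rmax_r (sg * Afun Z m x) c); lra].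
    apply continuity_pt_of_eps. intros eps He.
    destruct (continuity_pt_eps (fun th => sg * Afun Z m th) x
      (continuity_pt_scal (fun a => Afun Z m a) sg x (Afun_continuous Z m x)) eps He) as [d [Hd Hd']].
    exists d. split; auto. intros y Hy. eapply Rle_lt_trans; [apply Rmax_r_lipschitz | auto].
Qed.

Lemma reg_integrand_eq (m : nat) (Z : pvf) (sg c th : R) : (sg = 1 \/ sg = -1) -> 0 < c ->
  2 * c <= sg * Afun Z m th -> reg_integrand m Z sg c th = Rfun Z m th / Afun Z m th.
Proof.
  intros Hs Hc H. unfold reg_integrand. rewrite Rmax_left by lra. destruct (sign_square sg Hs) as [Hss _].
  assert (Afun Z m th <> 0) by (intro Hz; rewrite Hz in H; lra).
  assert (sg <> 0) by (intro Hz; rewrite Hz in Hss; lra). field. split; auto.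
Qed.

Definition reg_primitive (m : nat) (Z : pvf) (sg c x : R) : R := RInt (reg_integrand m Z sg c) 0 x.

Lemma reg_primitive_derivative (m : nat) (Z : pvf) (sg c x : R) : 0 < c ->
  derivable_pt_lim (reg_primitive m Z sg c) x (reg_integrand m Z sg c x).
Proof.
  intros Hc. apply (derivable_pt_lim_ext (fun x => 0 + RInt (reg_integrand m Z sg c) 0 x)).
  - intros; unfold reg_primitive; ring.
  - apply derivable_lim_RInt. intros; apply reg_integrand_continuous; auto.
Qed.

Lemma reg_primitive_0 (m : nat) (Z : pvf) (sg c : R) : reg_primitive m Z sg c 0 = 0.
Proof. unfold reg_primitive. rewrite RInt_point. reflexivity. Qed.

Lemma mu_as_primitives (m : nat) (X Y : pvf) (sg cX cY : R) pr : (sg = 1 \/ sg = -1) -> 0 < cX -> 0 < cY ->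
  (forall th, 0 <= th <= PI -> 2 * cX <= sg * Afun X m th) ->
  (forall th, 0 <= th <= PI -> 2 * cY <= sg * Afun Y m th) ->
  RiemannInt (f := fun th => Rfun X m th / Afun X m th + Rfun Y m th / Afun Y m th) (a := 0) (b := PI) pr
    = reg_primitive m X sg cX PI + reg_primitive m Y sg cY PI.
Proof.
  intros Hs HcX HcY HX HY. rewrite <- RInt_Reals. pose proof PI_RGT_0.
  rewrite (RInt_ext _ (fun x => reg_integrand m X sg cX x + reg_integrand m Y sg cY x)).
  - apply (RInt_plus (V := R_CompleteNormedModule)); apply ex_RInt_cont; intros; apply reg_integrand_continuous; auto.
  - intros x Hx. rewrite Rmin_left, Rmax_right in Hx by lra.
    rewrite !reg_integrand_eq; auto; [apply HY | apply HX]; lra.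
Qed.

(** * The return map of [S^1] in both orientations *)

(** counterclockwise: upper half by [X] from [0] to [pi], lower half by [Y] from [pi] to [2 pi] *)
Lemma S1_estimate_ccw (m : nat) (X Y : pvf) pr : Nat.Odd m ->
  (forall th, 0 <= sin th -> Afun X m th <> 0) -> (forall th, sin th <= 0 -> Afun Y m th <> 0) ->
  0 < Afun X m 0 -> 0 < Afun X m 0 * Afun Y m 0 ->
  log_return_estimate (return_rel m X Y)
    (- RiemannInt (f := fun th => Rfun X m th / Afun X m th + Rfun Y m th / Afun Y m th) (a := 0) (b := PI) pr).
Proof.
  intros Ho N1 N2 Hccw HXY. pose proof PI_RGT_0.
  destruct (S1_sign_bounds m X Y 1 Ho (or_introl eq_refl) ltac:(lra) ltac:(nra) N1 N2) as [cX [cY [HcX [HcY [HX HY]]]]].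
  assert (ERR : return_rel m X Y = two_turn_rel m X Y 0 PI (2 * PI)).
  { apply functional_extensionality; intro r0; apply functional_extensionality; intro r1.
    unfold return_rel. destruct Rlt_dec; [reflexivity | contradiction]. }
  rewrite ERR, (mu_as_primitives m X Y 1 cX cY pr (or_introl eq_refl) HcX HcY HX HY).
  replace (- (reg_primitive m X 1 cX PI + reg_primitive m Y 1 cY PI))
    with (two_turn_exponent 0 PI (2 * PI) (reg_primitive m X 1 cX) (fun x => reg_primitive m Y 1 cY (x + - PI))).
  2:{ unfold two_turn_exponent. replace (2 * PI + - PI) with PI by ring. replace (PI + - PI) with 0 by ring.
      rewrite !reg_primitive_0. ring. }
  apply (two_turn_log_estimate m X Y 0 PI (2 * PI) 1 cX cY _ (reg_integrand m X 1 cX) _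
           (fun x => reg_integrand m Y 1 cY (x + - PI))); try (ring || lra).
  - intros th Hth. apply HX. lra.
  - intros th Hth. rewrite <- (Afun_shift_mPI m Y th Ho). apply HY. lra.
  - intros x. apply reg_primitive_derivative; auto.
  - intros x. apply (derivable_lim_shift (reg_primitive m Y 1 cY)). intros; apply reg_primitive_derivative; auto.
  - intros th Hth. apply reg_integrand_eq; auto. apply HX; lra.
  - intros th Hth. replace (th + - PI) with (th - PI) by ring.
    rewrite reg_integrand_eq, Afun_shift_mPI, Rfun_shift_mPI; auto. rewrite Afun_shift_mPI by auto.
    rewrite <- (Afun_shift_mPI m Y th Ho). apply HY. lra.
Qed.

(** clockwise: lower half by [Y] from [0] to [- pi], upper half by [X] from [- pi] to [- 2 pi] *)
Lemma S1_estimate_cw (m : nat) (X Y : pvf) pr : Nat.Odd m ->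
  (forall th, 0 <= sin th -> Afun X m th <> 0) -> (forall th, sin th <= 0 -> Afun Y m th <> 0) ->
  ~ 0 < Afun X m 0 -> 0 < Afun X m 0 * Afun Y m 0 ->
  log_return_estimate (return_rel m X Y)
    (RiemannInt (f := fun th => Rfun X m th / Afun X m th + Rfun Y m th / Afun Y m th) (a := 0) (b := PI) pr).
Proof.
  intros Ho N1 N2 Hcw HXY. pose proof PI_RGT_0.
  assert (HXn : Afun X m 0 < 0) by (pose proof (N1 0 ltac:(rewrite sin_0; lra)); lra).
  destruct (S1_sign_bounds m X Y (-1) Ho (or_intror eq_refl) ltac:(lra) ltac:(nra) N1 N2) as [cX [cY [HcX [HcY [HX HY]]]]].
  assert (ERR : return_rel m X Y = two_turn_rel m Y X 0 (- PI) (- 2 * PI)).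
  { apply functional_extensionality; intro r0; apply functional_extensionality; intro r1.
    unfold return_rel. destruct Rlt_dec; [contradiction | reflexivity]. }
  rewrite ERR, (mu_as_primitives m X Y (-1) cX cY pr (or_intror eq_refl) HcX HcY HX HY).
  replace (reg_primitive m X (-1) cX PI + reg_primitive m Y (-1) cY PI)
    with (two_turn_exponent 0 (- PI) (- 2 * PI) (fun x => reg_primitive m Y (-1) cY (x + PI))
            (fun x => reg_primitive m X (-1) cX (x + 2 * PI))).
  2:{ unfold two_turn_exponent. replace (- PI + PI) with 0 by ring. replace (0 + PI) with PI by ring.
      replace (- 2 * PI + 2 * PI) with 0 by ring. replace (- PI + 2 * PI) with PI by ring.
      rewrite !reg_primitive_0. ring. }
  apply (two_turn_log_estimate m Y X 0 (- PI) (- 2 * PI) (-1) cY cX _ (fun x => reg_integrand m Y (-1) cY (x + PI)) _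
           (fun x => reg_integrand m X (-1) cX (x + 2 * PI))); try (ring || lra).
  - intros th Hth. rewrite <- (Afun_shift_PI m Y th Ho). apply HY. lra.
  - intros th Hth. rewrite <- (Afun_shift_2PI m X th Ho). apply HX. lra.
  - intros x. apply (derivable_lim_shift (reg_primitive m Y (-1) cY)). intros; apply reg_primitive_derivative; auto.
  - intros x. apply (derivable_lim_shift (reg_primitive m X (-1) cX)). intros; apply reg_primitive_derivative; auto.
  - intros th Hth. rewrite reg_integrand_eq, Afun_shift_PI, Rfun_shift_PI by (auto; apply HY; lra). reflexivity.
  - intros th Hth. rewrite reg_integrand_eq, Afun_shift_2PI, Rfun_shift_2PI by (auto; apply HX; lra). reflexivity.
Qed.

Theorem mainTheorem6 (m : nat) (X Y : pvf)
  (Hodd : Nat.Odd m) (HZ : in_Omega m X Y) (Hns : no_singular_on_S1 m X Y)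
  (pr : Riemann_integrable
          (fun th => Rfun X m th / Afun X m th + Rfun Y m th / Afun Y m th) 0 PI) :
  let mu := RiemannInt pr in
  closed_polytraj_type1 m X Y /\
  (exists delta Pi, is_poincare_map m X Y delta Pi /\
                    rderiv_at Pi 0 (exp (orient_sign m X * mu))) /\
  (orient_sign m X * mu < 0 -> attractor m X Y) /\
  (orient_sign m X * mu > 0 -> repeller m X Y) /\
  (elementary m X Y <-> mu <> 0).
Proof.
  intros mu. destruct (no_singular_consequences m X Y Hns) as [N1 [N2 HXY]].
  destruct (S1_sewing m X Y Hodd HXY) as [Sew0 SewPI].
  assert (Hest : log_return_estimate (return_rel m X Y) (orient_sign m X * mu) /\
                 (orient_sign m X * mu <> 0 <-> mu <> 0)).
  { unfold orient_sign. destruct (Rlt_dec 0 (Afun X m 0)) as [Hccw|Hcw].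
    - split; [replace (-1 * mu) with (- mu) by ring; apply S1_estimate_ccw; auto | split; intros H Hc; apply H; lra].
    - split; [replace (1 * mu) with mu by ring; apply S1_estimate_cw; auto | split; intros H Hc; apply H; lra]. }
  destruct Hest as [Hest Hsign].
  destruct (log_return_consequences _ _ Hest) as [H00 [HPi [HAtt [HRep HElem]]]].
  split; [split; [exact H00 | split; auto]|].
  split; [exact HPi|]. split; [exact HAtt|]. split; [exact HRep|].
  unfold elementary. rewrite HElem. exact Hsign.
Qed.
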